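(* Let $\rho\in\mathbb R$, let $\kappa_{\mathbf a}:\mathbb H_\rho\times\mathbb H_\rho\to\mathbb C$ be a positive semi-definite Dirichlet series kernel with coefficient matrix $\mathbf a=(a_{m,n})$ and associated reproducing kernel Hilbert space $\mathscr H_{\mathbf a}$. Let $f(s)=\sum_{n\ge1}\hat f(n)n^{-s}$ be a Dirichlet series convergent at every $s\in\mathbb H_\rho$. Then $f\in\mathscr H_{\mathbf a}$ if and only if there exists a real number $c\ge0$ such that the matrix $\big(c^2a_{m,n}-\hat f(m)\overline{\hat f(n)}\big)_{m,n=1}^\infty$ is formally positive semi-definite.
   Context: $\mathbb H_\rho=\{\Re s>\rho\}$. $\kappa_{\mathbf a}(s,u)=\sum_{m,n\ge1}a_{m,n}m^{-s}n^{-\bar u}$ is a Dirichlet series kernel on $\mathbb H_\rho$ if $(s,u)\mapsto\kappa_{\mathbf a}(s,\bar u)$ is regularly convergent on $\mathbb H_\rho\times\mathbb H_\rho$ (the double series converges at each point and every row and column series converges there). $\mathscr H_{\mathbf a}$ is the Hilbert space of functions on $\mathbb H_\rho$ with $\kappa_{\mathbf a}(\cdot,t)\in\mathscr H_{\mathbf a}$ and $\langle f,\kappa_{\mathbf a}(\cdot,t)\rangle=f(t)$. An infinite matrix is formally positive semi-definite if all its finite principal sections $(x_{m,n})_{m,n\in F}$, $F\subset\mathbb N$ finite, are positive semi-definite. *)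

From Stdlib Require Import Reals List.
From Coquelicot Require Import Coquelicot.
Open Scope R_scope.

(* Convention: coefficient sequences/matrices are indexed from 0, with
   index i standing for the integer i+1:  fh i = \hat f(i+1),
   a i j = a_{i+1,j+1}. *)

Definition Hrho (rho : R) := { s : C | rho < Re s }.

(* n^{-s} for a positive integer n and complex s:
   exp(-s log n) = exp(-Re s log n) (cos(Im s log n) - i sin(Im s log n)). *)
Definition npow_neg (n : nat) (s : C) : C :=
  let l := ln (INR n) in
  (exp (- Re s * l) * cos (Im s * l), - (exp (- Re s * l) * sin (Im s * l))).

Fixpoint csum (u : nat -> C) (N : nat) : C :=
  match N with O => RtoC 0 | S N' => Cplus (csum u N') (u N') end.

Definition series_to (u : nat -> C) (L : C) : Prop :=
  forall eps : R, 0 < eps -> exists N0 : nat,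
    forall N, (N0 <= N)%nat -> Cmod (Cminus (csum u N) L) < eps.

Definition series_cv (u : nat -> C) : Prop := exists L, series_to u L.

Definition dsum (x : nat -> nat -> C) (M N : nat) : C :=
  csum (fun m => csum (fun n => x m n) N) M.

Definition dseries_to (x : nat -> nat -> C) (L : C) : Prop :=
  forall eps : R, 0 < eps -> exists N0 : nat,
    forall M N, (N0 <= M)%nat -> (N0 <= N)%nat ->
      Cmod (Cminus (dsum x M N) L) < eps.

Definition regularly_cv_to (x : nat -> nat -> C) (L : C) : Prop :=
  dseries_to x L /\
  (forall m, series_cv (fun n => x m n)) /\
  (forall n, series_cv (fun m => x m n)).

Definition kterm (a : nat -> nat -> C) (s u : C) (m n : nat) : C :=
  Cmult (Cmult (a m n) (npow_neg (S m) s)) (npow_neg (S n) u).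

(* K is the Dirichlet series kernel with coefficient matrix a on H_rho:
   (s,u) |-> kappa_a(s, ubar) is regularly convergent on H_rho x H_rho and
   K s u = kappa_a(s,u) = sum a_{m,n} m^{-s} n^{-ubar}.  (Since u in H_rho
   iff ubar in H_rho, quantifying over u with conj u is the same.) *)
Definition is_dirichlet_kernel (rho : R) (a : nat -> nat -> C)
  (K : Hrho rho -> Hrho rho -> C) : Prop :=
  forall s u : Hrho rho,
    regularly_cv_to (kterm a (proj1_sig s) (Cconj (proj1_sig u))) (K s u).

Definition psd_kernel {X : Type} (K : X -> X -> C) : Prop :=
  forall pts : list (X * C),
    let q := fold_right Cplus (RtoC 0)
      (map (fun p => fold_right Cplus (RtoC 0)
         (map (fun r => Cmult (Cmult (snd p) (Cconj (snd r))) (K (fst p) (fst r)))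
              pts)) pts) in
    Im q = 0 /\ 0 <= Re q.

Definition formally_psd (x : nat -> nat -> C) : Prop :=
  forall (F : list nat) (c : nat -> C), NoDup F ->
    let q := fold_right Cplus (RtoC 0)
      (map (fun m => fold_right Cplus (RtoC 0)
         (map (fun n => Cmult (Cmult (Cconj (c m)) (x m n)) (c n)) F)) F) in
    Im q = 0 /\ 0 <= Re q.

Definition fzero {rho} : Hrho rho -> C := fun _ => RtoC 0.
Definition fadd {rho} (f g : Hrho rho -> C) : Hrho rho -> C :=
  fun s => Cplus (f s) (g s).
Definition fscal {rho} (c : C) (f : Hrho rho -> C) : Hrho rho -> C :=
  fun s => Cmult c (f s).
Definition fsub {rho} (f g : Hrho rho -> C) : Hrho rho -> C :=
  fun s => Cminus (f s) (g s).

Record RKHS (rho : R) (K : Hrho rho -> Hrho rho -> C) := {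
  mem : (Hrho rho -> C) -> Prop;
  ip : (Hrho rho -> C) -> (Hrho rho -> C) -> C;
  mem0 : mem fzero;
  memD : forall f g, mem f -> mem g -> mem (fadd f g);
  memZ : forall c f, mem f -> mem (fscal c f);
  ipD : forall f g h, mem f -> mem g -> mem h ->
          ip (fadd f g) h = Cplus (ip f h) (ip g h);
  ipZ : forall c f g, mem f -> mem g -> ip (fscal c f) g = Cmult c (ip f g);
  ip_sym : forall f g, mem f -> mem g -> ip g f = Cconj (ip f g);
  ip_pos : forall f, mem f -> 0 <= Re (ip f f);
  ip_def : forall f, mem f -> ip f f = RtoC 0 -> f = fzero;
  complete : forall u : nat -> (Hrho rho -> C),
    (forall k, mem (u k)) ->
    (forall eps, 0 < eps -> exists N0, forall k l, (N0 <= k)%nat -> (N0 <= l)%nat ->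
        sqrt (Re (ip (fsub (u k) (u l)) (fsub (u k) (u l)))) < eps) ->
    exists g, mem g /\
      (forall eps, 0 < eps -> exists N0, forall k, (N0 <= k)%nat ->
        sqrt (Re (ip (fsub (u k) g) (fsub (u k) g))) < eps);
  kmem : forall t, mem (fun s => K s t);
  repro : forall f t, mem f -> ip f (fun s => K s t) = f t
}.

(* f belongs to H_K (the RKHS of K is unique, so "some RKHS of K
   contains f" is the same as "f belongs to the RKHS of K") *)
Definition in_RKHS (rho : R) (K : Hrho rho -> Hrho rho -> C)
  (f : Hrho rho -> C) : Prop :=
  exists H : RKHS rho K, mem rho K H f.

From Stdlib Require Import Reals List Lra Lia Classical ClassicalEpsilon FunctionalExtensionality.
From Coquelicot Require Import Coquelicot.
Open Scope R_scope.

(* First, for a positive semi-definite kernel K, f lies in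
   the RKHS of K iff c^2 K(s,t) - f(s) conj(f(t)) is a positive semi-definite kernel for some
   c >= 0.  The RKHS is built as the completion of the finite combinations sum_p c_p K(., t_p),
   realised as pointwise limits of Cauchy sequences.  If the kernel above is positive, the
   pairing sum_p c_p conj(f(t_p)) is bounded by c times the norm, and a maximizing sequence of
   its real part on the unit ball, scaled by the supremum, is Cauchy (parallelogram law) and
   converges pointwise to f.  Conversely, Cauchy-Schwarz in any RKHS containing f gives
   positivity with c = |f|.
   Second, c^2 K - f conj(f) is again a Dirichlet series kernel, with coefficient matrix
   c^2 a - fh conj(fh), and a Dirichlet series kernel is positive semi-definite iff its
   coefficient matrix is formally positive semi-definite.  The quadratic form of the kernel at
   points t_p is the diagonal limit of the quadratic forms of the matrix at the coefficients of
   the Dirichlet polynomial sum_p c_p n^(-t_p).  Conversely, averaging over the points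
   sigma + i p h, p = 0..P, makes these coefficients converge to any prescribed finitely
   supported vector, since the mean of e^(i p h (log k - log n)) over p tends to 0 for k <> n;
   the tails of the double series are controlled by the boundedness of the terms at a smaller
   abscissa, which regular convergence provides. *)

Definition lsum {A} (l : list A) (g : A -> C) : C := fold_right Cplus (RtoC 0) (map g l).
Definition rsum {A} (l : list A) (g : A -> R) : R := fold_right Rplus 0 (map g l).

Lemma lsum_cons {A} (a : A) l g : lsum (a :: l) g = (g a + lsum l g)%C.
Proof. reflexivity. Qed.

Lemma lsum_app {A} (l1 l2 : list A) g : lsum (l1 ++ l2) g = (lsum l1 g + lsum l2 g)%C.
Proof. induction l1 as [|x l1 IH]; unfold lsum in *; simpl; [ring|]. rewrite IH. ring. Qed.

Lemma lsum_ext {A} (l : list A) g h : (forall x, In x l -> g x = h x) -> lsum l g = lsum l h.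
Proof. intros H. unfold lsum. f_equal. apply map_ext_in. exact H. Qed.

Lemma lsum_map {A B} (f : A -> B) l g : lsum (map f l) g = lsum l (fun x => g (f x)).
Proof. unfold lsum. rewrite map_map. reflexivity. Qed.

Lemma lsum_add {A} (l : list A) g h : lsum l (fun x => g x + h x)%C = (lsum l g + lsum l h)%C.
Proof. induction l as [|x l IH]; unfold lsum in *; simpl; [ring|]. rewrite IH. ring. Qed.

Lemma lsum_mult_l {A} (l : list A) c g : lsum l (fun x => c * g x)%C = (c * lsum l g)%C.
Proof. induction l as [|x l IH]; unfold lsum in *; simpl; [ring|]. rewrite IH. ring. Qed.

Lemma lsum_mult_r {A} (l : list A) c g : lsum l (fun x => g x * c)%C = (lsum l g * c)%C.
Proof. induction l as [|x l IH]; unfold lsum in *; simpl; [ring|]. rewrite IH. ring. Qed.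

Lemma lsum_sub {A} (l : list A) g h : lsum l (fun x => g x - h x)%C = (lsum l g - lsum l h)%C.
Proof. induction l as [|x l IH]; unfold lsum in *; simpl; [ring|]. rewrite IH. ring. Qed.

Lemma lsum_0 {A} (l : list A) : lsum l (fun _ => RtoC 0) = RtoC 0.
Proof. induction l as [|x l IH]; unfold lsum in *; simpl; [ring|]. rewrite IH. ring. Qed.

Lemma lsum_conj {A} (l : list A) g : Cconj (lsum l g) = lsum l (fun x => Cconj (g x)).
Proof.
  induction l as [|x l IH]; unfold lsum in *; simpl.
  - apply injective_projections; simpl; ring.
  - rewrite Cplus_conj, IH. reflexivity.
Qed.

Lemma lsum_comm {A B} (l1 : list A) (l2 : list B) (g : A -> B -> C) :
  lsum l1 (fun a => lsum l2 (g a)) = lsum l2 (fun b => lsum l1 (fun a => g a b)).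
Proof.
  induction l1 as [|x l1 IH]; simpl.
  - symmetry. apply lsum_0.
  - rewrite lsum_cons, IH, <- lsum_add. reflexivity.
Qed.

Lemma lsum_mult {A B} (l1 : list A) (l2 : list B) f g :
  (lsum l1 f * lsum l2 g)%C = lsum l1 (fun a => lsum l2 (fun b => f a * g b))%C.
Proof.
  rewrite <- lsum_mult_r. apply lsum_ext. intros a _. rewrite <- lsum_mult_l. reflexivity.
Qed.

Lemma Cmod_lsum {A} (l : list A) g : Cmod (lsum l g) <= rsum l (fun x => Cmod (g x)).
Proof.
  induction l as [|x l IH]; unfold lsum, rsum in *; simpl.
  - rewrite Cmod_0. lra.
  - eapply Rle_trans; [apply Cmod_triangle|]. lra.
Qed.

Lemma rsum_le {A} (l : list A) g h : (forall x, In x l -> g x <= h x) -> rsum l g <= rsum l h.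
Proof.
  induction l as [|x l IH]; intros H; unfold rsum in *; simpl; [lra|].
  apply Rplus_le_compat; [apply H; left; auto | apply IH; intros; apply H; right; auto].
Qed.

Lemma rsum_nonneg {A} (l : list A) g : (forall x, In x l -> 0 <= g x) -> 0 <= rsum l g.
Proof.
  intros H. apply Rle_trans with (rsum l (fun _ => 0)); [|apply rsum_le; auto].
  right. clear H. induction l as [|x l IH]; unfold rsum in *; simpl; lra.
Qed.

Lemma rsum_mult_l {A} (l : list A) c g : rsum l (fun x => c * g x) = c * rsum l g.
Proof. induction l as [|x l IH]; unfold rsum in *; simpl; [ring|]. rewrite IH. ring. Qed.

Lemma rsum_In_le {A} (l : list A) g x :
  (forall y, In y l -> 0 <= g y) -> In x l -> g x <= rsum l g.
Proof.
  induction l as [|y l IH]; intros Hpos Hx; [destruct Hx|]. unfold rsum; simpl.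
  destruct Hx as [<-|Hx].
  - pose proof (rsum_nonneg l g (fun z Hz => Hpos z (or_intror Hz))). unfold rsum in *. lra.
  - pose proof (Hpos y (or_introl eq_refl)). pose proof (IH (fun z Hz => Hpos z (or_intror Hz)) Hx).
    unfold rsum in *. lra.
Qed.

Lemma csum_lsum (u : nat -> C) N : csum u N = lsum (seq 0 N) u.
Proof.
  induction N as [|N IH]; [reflexivity|].
  rewrite seq_S, lsum_app, <- IH. unfold lsum; simpl. ring.
Qed.

Definition nonneg_real (z : C) : Prop := Im z = 0 /\ 0 <= Re z.

Lemma im_le_Cmod z : Rabs (Im z) <= Cmod z.
Proof. eapply Rle_trans; [apply Rmax_r | apply Rmax_Cmod]. Qed.

Lemma nonneg_real_approx z :
  (forall eps, 0 < eps -> exists y, nonneg_real y /\ Cmod (z - y)%C < eps) -> nonneg_real z.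
Proof.
  intros H. split.
  - apply NNPP. intros Hz. destruct (H (Rabs (Im z))) as [y [[Hy _] Hzy]]; [apply Rabs_pos_lt; auto|].
    assert (Him : Im (z - y)%C = Im z) by (unfold Cminus, Cplus, Copp, Im in *; simpl; rewrite Hy; ring).
    pose proof (im_le_Cmod (z - y)%C). rewrite Him in *. lra.
  - apply Rnot_lt_le. intros Hz. destruct (H (- Re z)) as [y [[_ Hy] Hzy]]; [lra|].
    assert (Hre : Re (z - y)%C = Re z - Re y) by (unfold Cminus, Cplus, Copp, Re; simpl; ring).
    pose proof (re_le_Cmod (z - y)%C). pose proof (Rle_abs (- Re (z - y)%C)).
    rewrite Rabs_Ropp, Hre in *. lra.
Qed.

Section FilterLimits.
Context {T : Type} {F : (T -> Prop) -> Prop} {FF : Filter F}.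

Lemma filterlim_Cplus (u v : T -> C) (l m : C) :
  filterlim u F (locally l) -> filterlim v F (locally m) ->
  filterlim (fun x => u x + v x)%C F (locally (l + m)%C).
Proof. intros Hu Hv. exact (filterlim_comp_2 u v _ Hu Hv (@filterlim_plus _ C_NormedModule l m)). Qed.

(* Coquelicot's [filterlim_mult] lives on the uniform structure of the absolute-value
   ring [C_AbsRing]; [locally_C] identifies it with that of [C]. *)
Lemma filterlim_Cmult (u v : T -> C) (l m : C) :
  filterlim u F (locally l) -> filterlim v F (locally m) ->
  filterlim (fun x => u x * v x)%C F (locally (l * m)%C).
Proof.
  intros Hu Hv. apply (filterlim_comp_2 u v Cmult Hu Hv).
  intros P HP. apply locally_C in HP.
  destruct (@filterlim_mult C_AbsRing l m P HP) as [Q R HQ HR HQR].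
  apply locally_C in HQ. apply locally_C in HR.
  exact (Filter_prod _ _ _ Q R HQ HR HQR).
Qed.

Lemma filterlim_Cconst (c : C) : filterlim (fun _ : T => c) F (locally c).
Proof. apply filterlim_const. Qed.

Lemma filterlim_Cscal (c : C) (u : T -> C) (l : C) :
  filterlim u F (locally l) -> filterlim (fun x => c * u x)%C F (locally (c * l)%C).
Proof. intros Hu. apply filterlim_Cmult; [apply filterlim_Cconst | exact Hu]. Qed.

Lemma filterlim_Cminus (u v : T -> C) (l m : C) :
  filterlim u F (locally l) -> filterlim v F (locally m) ->
  filterlim (fun x => u x - v x)%C F (locally (l - m)%C).
Proof.
  intros Hu Hv. apply filterlim_Cplus; [exact Hu|].
  exact (filterlim_comp _ _ _ v Copp _ _ _ Hv (@filterlim_opp _ C_NormedModule m)).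
Qed.

Lemma filterlim_Cconj (u : T -> C) (l : C) :
  filterlim u F (locally l) -> filterlim (fun x => Cconj (u x)) F (locally (Cconj l)).
Proof.
  rewrite !filterlim_locally_ball_norm. intros Hu eps.
  refine (filter_imp _ _ _ (Hu eps)). intros x Hx.
  change (Cmod (Cconj (u x) - Cconj l)%C < eps). rewrite <- Cminus_conj, Cmod_conj. exact Hx.
Qed.

Lemma filterlim_lsum {A} (l : list A) (u : A -> T -> C) (L : A -> C) :
  (forall a, In a l -> filterlim (u a) F (locally (L a))) ->
  filterlim (fun x => lsum l (fun a => u a x)) F (locally (lsum l L)).
Proof.
  induction l as [|a l IH]; intros H.
  - apply filterlim_Cconst.
  - apply filterlim_Cplus; [apply H; left; auto | apply IH; intros; apply H; right; auto].
Qed.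

End FilterLimits.

Definition is_lim_Cseq (u : nat -> C) (l : C) : Prop := filterlim u eventually (locally l).

Lemma is_lim_Cseq_eps u l : is_lim_Cseq u l <->
  forall eps, 0 < eps -> exists N, forall n, (N <= n)%nat -> Cmod (u n - l)%C < eps.
Proof.
  unfold is_lim_Cseq. rewrite filterlim_locally_ball_norm. split.
  - intros H eps Heps. exact (H (mkposreal eps Heps)).
  - intros H [eps Heps]. exact (H eps Heps).
Qed.

Lemma series_to_lim u L : series_to u L <-> is_lim_Cseq (csum u) L.
Proof. rewrite is_lim_Cseq_eps. reflexivity. Qed.

Lemma is_lim_Cseq_unique u l m : is_lim_Cseq u l -> is_lim_Cseq u m -> l = m.
Proof. intros Hl Hm. exact (filterlim_locally_unique (V := C_NormedModule) _ _ _ Hl Hm). Qed.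

Lemma is_lim_Cseq_nonneg_real u l : is_lim_Cseq u l -> (forall n, nonneg_real (u n)) -> nonneg_real l.
Proof.
  rewrite is_lim_Cseq_eps. intros Hl Hu. apply nonneg_real_approx. intros eps Heps.
  destruct (Hl eps Heps) as [N HN]. exists (u N). split; [auto|].
  rewrite <- Cmod_opp. replace (- (l - u N))%C with (u N - l)%C by ring. apply HN. lia.
Qed.

Lemma Cauchy_is_lim_Cseq u :
  (forall eps, 0 < eps -> exists N, forall k l, (N <= k)%nat -> (N <= l)%nat -> Cmod (u k - u l)%C < eps) ->
  exists l, is_lim_Cseq u l.
Proof.
  intros H. apply (filterlim_locally_cauchy
    (U := CompleteNormedModule.CompleteSpace _ C_CompleteNormedModule) (F := eventually)).
  intros eps. destruct (H eps (cond_pos eps)) as [N HN].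
  exists (fun n => (N <= n)%nat). split; [exists N; auto|].
  intros k l Hk Hl. apply (norm_compat1 (K := C_AbsRing) (V := C_NormedModule)).
  change (Cmod (u l - u k)%C < eps). auto.
Qed.

Lemma finite_bound (g : nat -> R) N : exists B, 0 < B /\ forall n, (n < N)%nat -> g n <= B.
Proof.
  induction N as [|N [B [HB HgB]]]; [exists 1; split; [lra | intros; lia]|].
  exists (Rmax B (g N)). split; [eapply Rlt_le_trans; [apply HB | apply Rmax_l]|].
  intros n Hn. destruct (Nat.eq_dec n N) as [->|Hne]; [apply Rmax_r|].
  eapply Rle_trans; [apply HgB; lia | apply Rmax_l].
Qed.

Lemma is_lim_Cseq_bounded u l : is_lim_Cseq u l -> exists B, 0 < B /\ forall n, Cmod (u n) <= B.
Proof.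
  rewrite is_lim_Cseq_eps. intros H. destruct (H 1 Rlt_0_1) as [N HN].
  destruct (finite_bound (fun n => Cmod (u n)) N) as [B [HB HuB]].
  exists (B + Cmod l + 1). pose proof (Cmod_ge_0 l). split; [lra|]. intros n.
  destruct (Nat.lt_ge_cases n N) as [Hn|Hn]; [pose proof (HuB n Hn); simpl in *; lra|].
  specialize (HN n Hn). replace (u n) with (u n - l + l)%C by ring.
  eapply Rle_trans; [apply Cmod_triangle | lra].
Qed.

Definition Clim (u : nat -> C) : C := epsilon (inhabits (RtoC 0)) (is_lim_Cseq u).

Lemma Clim_spec u : (exists l, is_lim_Cseq u l) -> is_lim_Cseq u (Clim u).
Proof. apply epsilon_spec. Qed.

Lemma Rmult_lt_of_bound a b B e : 0 <= a -> 0 <= b <= B -> 0 < B -> a < e / B -> a * b < e.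
Proof.
  intros Ha Hb HB Hae. apply Rle_lt_trans with (a * B); [apply Rmult_le_compat_l; lra|].
  apply (Rmult_lt_compat_r B) in Hae; [|lra]. unfold Rdiv in Hae. rewrite Rmult_assoc, Rinv_l in Hae; lra.
Qed.

Lemma inv_INR_S_lt eps : 0 < eps -> exists N, forall k, (N <= k)%nat -> / (INR k + 1) < eps.
Proof.
  intros He. destruct (INR_unbounded (/ eps)) as [N HN]. exists N. intros k Hk.
  apply le_INR in Hk. pose proof (pos_INR k). rewrite <- (Rinv_inv eps).
  apply Rinv_lt_contravar; [apply Rmult_lt_0_compat; [apply Rinv_0_lt_compat|]|]; lra.
Qed.

Lemma Rabs_sqrt_sub_le a b : 0 <= a -> 0 <= b -> Rabs (sqrt a - sqrt b) <= sqrt (Rabs (a - b)).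
Proof.
  intros Ha Hb. pose proof (sqrt_pos a). pose proof (sqrt_pos b).
  pose proof (sqrt_sqrt a Ha). pose proof (sqrt_sqrt b Hb).
  rewrite <- (sqrt_pow2 (Rabs (sqrt a - sqrt b))) by apply Rabs_pos. apply sqrt_le_1_alt.
  rewrite pow2_abs. destruct (Rle_dec (sqrt b) (sqrt a)).
  - rewrite Rabs_right by nra. nra.
  - rewrite Rabs_left1 by nra. nra.
Qed.

Lemma Cminus_0_r (z : C) : (z - 0)%C = z.
Proof. ring. Qed.

Lemma Cmod_le_Rabs_re_im z : Cmod z <= Rabs (Re z) + Rabs (Im z).
Proof.
  destruct z as [a b]. unfold Cmod; simpl. pose proof (Rabs_pos a) as Ha. pose proof (Rabs_pos b) as Hb.
  rewrite <- (sqrt_pow2 (Rabs a + Rabs b)) by lra. apply sqrt_le_1_alt.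
  replace ((Rabs a + Rabs b) ^ 2) with (Rabs a ^ 2 + Rabs b ^ 2 + 2 * Rabs a * Rabs b) by ring.
  rewrite !pow2_abs. pose proof (Rmult_le_pos _ _ Ha Hb). simpl. lra.
Qed.

(** * Positive semi-definite kernels and their finite combinations *)

Lemma Cmod_sq_le_of_quadratic (A B : R) (W : C) : 0 <= B ->
  (forall z : C, 0 <= Re (A - Cconj z * W - z * Cconj W + z * Cconj z * B)%C) ->
  Cmod W ^ 2 <= A * B.
Proof.
  intros HB H.
  (* along the real line z = t W the hypothesis reads A - 2 t |W|^2 + t^2 |W|^2 B >= 0 *)
  assert (Ht : forall t, 0 <= A - 2 * t * Cmod W ^ 2 + t * t * Cmod W ^ 2 * B).
  { intros t. specialize (H (t * W)%C). rewrite Cmod2_alt. destruct W as [w1 w2]. simpl in *. nra. }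
  pose proof (pow2_ge_0 (Cmod W)) as HW. set (w := Cmod W ^ 2) in *.
  destruct (Req_dec B 0) as [->|HB0].
  - destruct (Req_dec w 0) as [->|Hw0]; [lra|].
    specialize (Ht ((Rabs A + 1) / w)).
    replace (A - 2 * ((Rabs A + 1) / w) * w + (Rabs A + 1) / w * ((Rabs A + 1) / w) * w * 0)
      with (A - 2 * (Rabs A + 1)) in Ht by (field; auto).
    pose proof (Rle_abs A). pose proof (Rabs_pos A). lra.
  - specialize (Ht (/ B)).
    replace (A - 2 * / B * w + / B * / B * w * B) with (A - w / B) in Ht by (field; auto).
    apply (Rmult_le_reg_r (/ B)); [apply Rinv_0_lt_compat; lra|].
    replace (A * B * / B) with A by (field; auto). unfold Rdiv in Ht. lra.
Qed.

Definition kform {X} (K : X -> X -> C) (pts : list (X * C)) : C :=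
  lsum pts (fun p => lsum pts (fun r => snd p * Cconj (snd r) * K (fst p) (fst r)))%C.

Lemma psd_kernelE {X} (K : X -> X -> C) : psd_kernel K <-> forall pts, nonneg_real (kform K pts).
Proof. reflexivity. Qed.

Lemma psd_kernel_herm {X} (K : X -> X -> C) : psd_kernel K -> forall s t, K t s = Cconj (K s t).
Proof.
  intros Hpsd s t.
  destruct (Hpsd ((s, RtoC 1) :: nil)) as [Hs _]. destruct (Hpsd ((t, RtoC 1) :: nil)) as [Ht _].
  destruct (Hpsd ((s, RtoC 1) :: (t, RtoC 1) :: nil)) as [H1 _].
  destruct (Hpsd ((s, RtoC 1) :: (t, Ci) :: nil)) as [H2 _]. simpl in Hs, Ht, H1, H2.
  destruct (K s s) as [a1 b1], (K t t) as [a2 b2], (K s t) as [a3 b3], (K t s) as [a4 b4].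
  unfold Im, Re, Cplus, Cmult, Cconj, Ci in *; simpl in *. apply injective_projections; simpl; lra.
Qed.

Section KernelCombinations.
Context {X : Type}.
Variable K : X -> X -> C.
Hypothesis K_psd : psd_kernel K.

(* A list [u] of pairs (t, c) stands for the function sum_(t,c) c K(., t). *)
Definition kfun (u : list (X * C)) (s : X) : C := lsum u (fun p => snd p * K s (fst p))%C.

Definition kip (u v : list (X * C)) : C :=
  lsum u (fun p => lsum v (fun r => snd p * Cconj (snd r) * K (fst r) (fst p)))%C.

Definition kscale (a : C) (u : list (X * C)) := map (fun p => (fst p, a * snd p)%C) u.
Definition ksub (u v : list (X * C)) := u ++ kscale (RtoC (-1)) v.
Definition knorm (u : list (X * C)) : R := sqrt (Re (kip u u)).

Lemma kfun_app u v s : kfun (u ++ v) s = (kfun u s + kfun v s)%C.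
Proof. apply lsum_app. Qed.

Lemma kfun_scale a u s : kfun (kscale a u) s = (a * kfun u s)%C.
Proof. unfold kfun, kscale. rewrite lsum_map, <- lsum_mult_l. apply lsum_ext. intros; simpl; ring. Qed.

Lemma kfun_ksub u v s : kfun (ksub u v) s = (kfun u s - kfun v s)%C.
Proof. unfold ksub. rewrite kfun_app, kfun_scale. ring. Qed.

Lemma kip_app_l u u' v : kip (u ++ u') v = (kip u v + kip u' v)%C.
Proof. apply lsum_app. Qed.

Lemma kip_app_r u v v' : kip u (v ++ v') = (kip u v + kip u v')%C.
Proof. unfold kip. rewrite <- lsum_add. apply lsum_ext. intros. apply lsum_app. Qed.

Lemma kip_scale_l a u v : kip (kscale a u) v = (a * kip u v)%C.
Proof.
  unfold kip, kscale. rewrite lsum_map, <- lsum_mult_l. apply lsum_ext. intros.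
  rewrite <- lsum_mult_l. apply lsum_ext. intros; simpl; ring.
Qed.

Lemma kip_scale_r a u v : kip u (kscale a v) = (Cconj a * kip u v)%C.
Proof.
  unfold kip, kscale. rewrite <- lsum_mult_l. apply lsum_ext. intros.
  rewrite lsum_map, <- lsum_mult_l. apply lsum_ext. intros; simpl. rewrite Cmult_conj. ring.
Qed.

Lemma kip_nil_l v : kip nil v = RtoC 0.
Proof. reflexivity. Qed.

Lemma kip_point u t : kip u ((t, RtoC 1) :: nil) = kfun u t.
Proof. apply lsum_ext. intros. unfold lsum; simpl. apply injective_projections; simpl; ring. Qed.

Lemma kip_kfun u v : kip u v = lsum v (fun r => Cconj (snd r) * kfun u (fst r))%C.
Proof.
  unfold kip, kfun. rewrite lsum_comm. apply lsum_ext. intros.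
  rewrite <- lsum_mult_l. apply lsum_ext. intros. ring.
Qed.

Lemma kip_sym u v : kip v u = Cconj (kip u v).
Proof.
  unfold kip. rewrite lsum_conj, lsum_comm. apply lsum_ext. intros. rewrite lsum_conj.
  apply lsum_ext. intros. rewrite !Cmult_conj, Cconj_conj, <- (psd_kernel_herm K K_psd). ring.
Qed.

Definition kconj (u : list (X * C)) := map (fun p => (fst p, Cconj (snd p))) u.

Lemma kip_kform u : kip u u = kform K (kconj u).
Proof.
  unfold kform, kconj. rewrite lsum_map. unfold kip. rewrite lsum_comm. apply lsum_ext. intros.
  rewrite lsum_map. apply lsum_ext. intros. simpl. rewrite Cconj_conj. ring.
Qed.

Lemma kip_nonneg u : nonneg_real (kip u u).
Proof. rewrite kip_kform. apply K_psd. Qed.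

Lemma kip_real u : kip u u = RtoC (Re (kip u u)).
Proof. destruct (kip_nonneg u) as [H _]. apply injective_projections; simpl; auto. Qed.

Lemma kip_CS u v : Cmod (kip u v) ^ 2 <= Re (kip u u) * Re (kip v v).
Proof.
  apply Cmod_sq_le_of_quadratic; [apply kip_nonneg|]. intros z.
  destruct (kip_nonneg (u ++ kscale (- z)%C v)) as [_ H].
  rewrite !kip_app_l, !kip_app_r, !kip_scale_l, !kip_scale_r, (kip_sym u v), Copp_conj in H.
  rewrite (kip_real u), (kip_real v) in H.
  eapply Rle_trans; [exact H|]. right. f_equal. ring.
Qed.

Lemma knorm_nonneg u : 0 <= knorm u.
Proof. apply sqrt_pos. Qed.

Lemma knorm_sq u : knorm u * knorm u = Re (kip u u).
Proof. apply sqrt_sqrt, kip_nonneg. Qed.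

Lemma Cmod_kip_le u v : Cmod (kip u v) <= knorm u * knorm v.
Proof.
  pose proof (kip_CS u v) as H. rewrite <- !knorm_sq in H.
  pose proof (knorm_nonneg u) as Hu. pose proof (knorm_nonneg v) as Hv. pose proof (Cmod_ge_0 (kip u v)).
  pose proof (Rmult_le_pos _ _ Hu Hv). nra.
Qed.

Lemma knorm_nil : knorm nil = 0.
Proof. unfold knorm. rewrite kip_nil_l. apply sqrt_0. Qed.

Lemma knorm_app u v : knorm (u ++ v) <= knorm u + knorm v.
Proof.
  pose proof (knorm_nonneg u). pose proof (knorm_nonneg v). pose proof (knorm_nonneg (u ++ v)).
  assert (knorm (u ++ v) * knorm (u ++ v) <= (knorm u + knorm v) * (knorm u + knorm v)); [|nra].
  rewrite knorm_sq, kip_app_l, !kip_app_r, (kip_sym u v).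
  replace ((knorm u + knorm v) * (knorm u + knorm v))
    with (knorm u * knorm u + knorm v * knorm v + 2 * (knorm u * knorm v)) by ring.
  rewrite !knorm_sq. pose proof (Cmod_kip_le u v). pose proof (re_le_Cmod (kip u v)).
  pose proof (Rle_abs (Re (kip u v))).
  destruct (kip u v) as [a b]. unfold Re, Cplus, Cconj in *. simpl in *. lra.
Qed.

Lemma knorm_scale a u : knorm (kscale a u) = Cmod a * knorm u.
Proof.
  unfold knorm. rewrite kip_scale_l, kip_scale_r, (kip_real u).
  replace (Re (a * (Cconj a * Re (kip u u)))%C) with (Cmod a ^ 2 * Re (kip u u)).
  - rewrite sqrt_mult, sqrt_pow2; [reflexivity | apply Cmod_ge_0 | apply pow2_ge_0 | apply kip_nonneg].
  - rewrite Cmod2_alt. destruct a as [a1 a2]. unfold Re, Im, Cmult, Cconj, RtoC; simpl. ring.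
Qed.

Lemma knorm_lt u eta : 0 < eta -> Re (kip u u) < eta * eta -> knorm u < eta.
Proof.
  intros He H. unfold knorm. rewrite <- (sqrt_square eta) by lra.
  apply sqrt_lt_1_alt. split; [apply kip_nonneg | exact H].
Qed.

Definition kequiv (u v : list (X * C)) : Prop := forall w, kip u w = kip v w.

Lemma kequiv_knorm u v : kequiv u v -> knorm u = knorm v.
Proof. intros H. unfold knorm. rewrite (H u), (kip_sym u v), (H v), <- (kip_sym v v). reflexivity. Qed.

Lemma kscale_app a u v : kscale a (u ++ v) = kscale a u ++ kscale a v.
Proof. apply map_app. Qed.

Ltac solve_kequiv :=
  let w := fresh "w" in
  intros w; unfold ksub; rewrite ?kscale_app, ?kip_app_l, ?kip_scale_l, ?kip_nil_l; ring.

Lemma knorm_ksub_triangle u v w : knorm (ksub u w) <= knorm (ksub u v) + knorm (ksub v w).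
Proof. rewrite (kequiv_knorm (ksub u w) (ksub u v ++ ksub v w)) by solve_kequiv. apply knorm_app. Qed.

Lemma knorm_le_ksub u v : knorm u <= knorm v + knorm (ksub u v).
Proof. rewrite (kequiv_knorm u (v ++ ksub u v)) by solve_kequiv. apply knorm_app. Qed.

Lemma kip_ksub_l u v w : kip (ksub u v) w = (kip u w - kip v w)%C.
Proof. unfold ksub. rewrite kip_app_l, kip_scale_l. ring. Qed.

Lemma kip_ksub_r u v w : kip w (ksub u v) = (kip w u - kip w v)%C.
Proof.
  unfold ksub. rewrite kip_app_r, kip_scale_r.
  replace (Cconj (RtoC (-1))) with (RtoC (-1)) by (apply injective_projections; simpl; ring). ring.
Qed.

Lemma kip_parallelogram a b :
  (kip (ksub a b) (ksub a b) + kip (a ++ b) (a ++ b))%C = (2 * kip a a + 2 * kip b b)%C.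
Proof. rewrite !kip_ksub_l, !kip_ksub_r, !kip_app_l, !kip_app_r. ring. Qed.

Lemma Cmod_kip_sub u u' v v' :
  Cmod (kip u v - kip u' v')%C <= knorm (ksub u u') * knorm v + knorm u' * knorm (ksub v v').
Proof.
  replace (kip u v - kip u' v')%C with (kip (ksub u u') v + kip u' (ksub v v'))%C
    by (rewrite kip_ksub_l, kip_ksub_r; ring).
  eapply Rle_trans; [apply Cmod_triangle|]. apply Rplus_le_compat; apply Cmod_kip_le.
Qed.

Lemma knorm_lim (w : nat -> list (X * C)) L : is_lim_Cseq (fun i => kip (w i) (w i)) L ->
  forall eps, 0 < eps -> exists N, forall i, (N <= i)%nat -> Rabs (knorm (w i) - sqrt (Re L)) < eps.
Proof.
  intros H e He.
  assert (HL : 0 <= Re L) by (apply (is_lim_Cseq_nonneg_real _ _ H); intros; apply kip_nonneg).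
  rewrite is_lim_Cseq_eps in H. destruct (H (e * e)) as [N HN]; [nra|]. exists N. intros i Hi.
  eapply Rle_lt_trans; [apply Rabs_sqrt_sub_le; [apply kip_nonneg | exact HL]|].
  rewrite <- (sqrt_square e) by lra. apply sqrt_lt_1_alt. split; [apply Rabs_pos|].
  eapply Rle_lt_trans; [|apply (HN i Hi)].
  replace (Re (kip (w i) (w i)) - Re L) with (Re (kip (w i) (w i) - L)%C)
    by (unfold Cminus, Cplus, Copp, Re; simpl; ring).
  apply re_le_Cmod.
Qed.

Definition kcauchy (s : nat -> list (X * C)) : Prop :=
  forall eps, 0 < eps -> exists N, forall k l, (N <= k)%nat -> (N <= l)%nat -> knorm (ksub (s k) (s l)) < eps.

Lemma kcauchy_bounded s : kcauchy s -> exists B, 0 < B /\ forall k, knorm (s k) <= B.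
Proof.
  intros H. destruct (H 1 Rlt_0_1) as [N HN].
  destruct (finite_bound (fun k => knorm (s k)) N) as [B [HB HsB]].
  exists (B + knorm (s N) + 1). pose proof (knorm_nonneg (s N)). split; [lra|]. intros k.
  destruct (Nat.lt_ge_cases k N) as [Hk|Hk]; [pose proof (HsB k Hk); simpl in *; lra|].
  pose proof (knorm_le_ksub (s k) (s N)). pose proof (HN k N Hk (le_n _)). lra.
Qed.

Lemma kcauchy_app s r : kcauchy s -> kcauchy r -> kcauchy (fun k => s k ++ r k).
Proof.
  intros Hs Hr e He. destruct (Hs (e/2)) as [N1 H1]; [lra|]. destruct (Hr (e/2)) as [N2 H2]; [lra|].
  exists (max N1 N2). intros k l Hk Hl.
  rewrite (kequiv_knorm _ (ksub (s k) (s l) ++ ksub (r k) (r l))) by solve_kequiv.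
  eapply Rle_lt_trans; [apply knorm_app|].
  specialize (H1 k l ltac:(lia) ltac:(lia)). specialize (H2 k l ltac:(lia) ltac:(lia)). lra.
Qed.

Lemma kcauchy_scale a s : kcauchy s -> kcauchy (fun k => kscale a (s k)).
Proof.
  intros Hs e He. pose proof (Cmod_ge_0 a).
  destruct (Hs (e / (Cmod a + 1))) as [N HN]; [apply Rdiv_lt_0_compat; lra|].
  exists N. intros k l Hk Hl.
  rewrite (kequiv_knorm _ (kscale a (ksub (s k) (s l)))) by solve_kequiv. rewrite knorm_scale.
  rewrite Rmult_comm. apply (Rmult_lt_of_bound _ _ (Cmod a + 1)); auto using knorm_nonneg; lra.
Qed.

Lemma kcauchy_ksub s r : kcauchy s -> kcauchy r -> kcauchy (fun k => ksub (s k) (r k)).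
Proof. intros Hs Hr. apply (kcauchy_app s _ Hs (kcauchy_scale _ r Hr)). Qed.

Lemma kcauchy_kip s r : kcauchy s -> kcauchy r -> exists l, is_lim_Cseq (fun k => kip (s k) (r k)) l.
Proof.
  intros Hs Hr. apply Cauchy_is_lim_Cseq.
  destruct (kcauchy_bounded s Hs) as [B1 [HB1 Hs1]]. destruct (kcauchy_bounded r Hr) as [B2 [HB2 Hr2]].
  intros e He. destruct (Hs (e / 2 / B2)) as [N1 H1]; [apply Rdiv_lt_0_compat; lra|].
  destruct (Hr (e / 2 / B1)) as [N2 H2]; [apply Rdiv_lt_0_compat; lra|].
  exists (max N1 N2). intros k l Hk Hl. eapply Rle_lt_trans; [apply Cmod_kip_sub|].
  assert (knorm (ksub (s k) (s l)) * knorm (r k) < e / 2).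
  { apply (Rmult_lt_of_bound _ _ B2); [apply knorm_nonneg | split; auto using knorm_nonneg | lra | apply H1; lia]. }
  assert (knorm (s l) * knorm (ksub (r k) (r l)) < e / 2).
  { rewrite Rmult_comm.
    apply (Rmult_lt_of_bound _ _ B1); [apply knorm_nonneg | split; auto using knorm_nonneg | lra | apply H2; lia]. }
  lra.
Qed.

Definition represents (g : X -> C) (s : nat -> list (X * C)) : Prop :=
  kcauchy s /\ forall t, is_lim_Cseq (fun k => kfun (s k) t) (g t).

Definition in_completion (g : X -> C) : Prop := exists s, represents g s.

Lemma represents_app f g s r :
  represents f s -> represents g r -> represents (fun x => f x + g x)%C (fun k => s k ++ r k).
Proof.
  intros [Hs Hst] [Hr Hrt]. split; [apply kcauchy_app; auto|]. intros t.
  apply (filterlim_ext (fun k => kfun (s k) t + kfun (r k) t)%C); [intros; symmetry; apply kfun_app|].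
  apply filterlim_Cplus; [apply Hst | apply Hrt].
Qed.

Lemma represents_scale a g s : represents g s -> represents (fun x => a * g x)%C (fun k => kscale a (s k)).
Proof.
  intros [Hs Hst]. split; [apply kcauchy_scale; auto|]. intros t.
  apply (filterlim_ext (fun k => a * kfun (s k) t)%C); [intros; symmetry; apply kfun_scale|].
  apply filterlim_Cscal, Hst.
Qed.

Lemma represents_ksub f g s r :
  represents f s -> represents g r -> represents (fun x => f x - g x)%C (fun k => ksub (s k) (r k)).
Proof.
  intros [Hs Hst] [Hr Hrt]. split; [apply kcauchy_ksub; auto|]. intros t.
  apply (filterlim_ext (fun k => kfun (s k) t - kfun (r k) t)%C); [intros; symmetry; apply kfun_ksub|].
  apply filterlim_Cminus; [apply Hst | apply Hrt].
Qed.

Lemma represents_const u : represents (kfun u) (fun _ => u).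
Proof.
  split; [|intros; apply filterlim_Cconst]. intros e He. exists 0%nat. intros.
  rewrite (kequiv_knorm _ nil) by solve_kequiv. rewrite knorm_nil. exact He.
Qed.

(* The compatibility condition that makes the completion a space of functions. *)
Lemma kcauchy_pointwise_0 d : kcauchy d -> (forall t, is_lim_Cseq (fun k => kfun (d k) t) (RtoC 0)) ->
  forall eta, 0 < eta -> exists N, forall k, (N <= k)%nat -> knorm (d k) < eta.
Proof.
  intros Hd Hd0 eta Heta. destruct (kcauchy_bounded d Hd) as [B [HB HdB]].
  set (eps := eta * eta / (2 * B + 2)).
  assert (Heps : 0 < eps) by (apply Rdiv_lt_0_compat; nra).
  destruct (Hd eps Heps) as [J HJ].
  assert (Hc : is_lim_Cseq (fun k => kip (d k) (d J)) (RtoC 0)).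
  { apply (filterlim_ext (fun k => lsum (d J) (fun r => Cconj (snd r) * kfun (d k) (fst r))%C));
      [intros; symmetry; apply kip_kfun|].
    rewrite <- (lsum_0 (d J)).
    replace (fun _ : X * C => RtoC 0) with (fun r : X * C => Cconj (snd r) * 0)%C
      by (apply functional_extensionality; intros; ring).
    apply filterlim_lsum. intros r _. apply filterlim_Cscal, Hd0. }
  rewrite is_lim_Cseq_eps in Hc. destruct (Hc eps Heps) as [N HN].
  exists (max N J). intros k Hk. apply knorm_lt; [exact Heta|].
  replace (kip (d k) (d k)) with (kip (d k) (d J) - kip (d k) (ksub (d J) (d k)))%C
    by (rewrite kip_ksub_r; ring).
  specialize (HN k ltac:(lia)). replace (kip (d k) (d J) - 0)%C with (kip (d k) (d J)) in HN by ring.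
  pose proof (Cmod_kip_le (d k) (ksub (d J) (d k))). specialize (HJ J k ltac:(lia) ltac:(lia)).
  assert (knorm (d k) * knorm (ksub (d J) (d k)) <= B * eps)
    by (apply Rmult_le_compat; auto using knorm_nonneg; lra).
  pose proof (re_le_Cmod (kip (d k) (d J))). pose proof (Rle_abs (Re (kip (d k) (d J)))).
  pose proof (re_le_Cmod (kip (d k) (ksub (d J) (d k)))).
  pose proof (Rle_abs (- Re (kip (d k) (ksub (d J) (d k))))). rewrite Rabs_Ropp in *.
  assert (eps + B * eps < eta * eta)
    by (replace (eps + B * eps) with (eta * eta / 2) by (unfold eps; field; lra); nra).
  unfold Cminus, Cplus, Copp, Re in *. simpl in *. lra.
Qed.

Lemma represents_ksub_0 g s s' : represents g s -> represents g s' ->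
  forall eta, 0 < eta -> exists N, forall k, (N <= k)%nat -> knorm (ksub (s k) (s' k)) < eta.
Proof.
  intros Hs Hs'. pose proof (represents_ksub _ _ _ _ Hs Hs') as [Hd Hdt].
  apply kcauchy_pointwise_0; [exact Hd|]. intros t. specialize (Hdt t).
  replace (RtoC 0) with (g t - g t)%C by ring. exact Hdt.
Qed.

(** * The completion is a reproducing kernel Hilbert space *)

Definition some_rep (g : X -> C) : nat -> list (X * C) :=
  epsilon (inhabits (fun _ => nil)) (represents g).

Definition cip (g h : X -> C) : C := Clim (fun k => kip (some_rep g k) (some_rep h k)).

Definition cnorm (g : X -> C) : R := sqrt (Re (cip g g)).

Lemma some_rep_spec g : in_completion g -> represents g (some_rep g).
Proof. apply epsilon_spec. Qed.

Lemma kip_represents_diff g h s s' r r' :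
  represents g s -> represents g s' -> represents h r -> represents h r' ->
  is_lim_Cseq (fun k => kip (s k) (r k) - kip (s' k) (r' k))%C (RtoC 0).
Proof.
  intros Hs Hs' Hr Hr'. rewrite is_lim_Cseq_eps.
  destruct (kcauchy_bounded r (proj1 Hr)) as [B1 [HB1 Hr1]].
  destruct (kcauchy_bounded s' (proj1 Hs')) as [B2 [HB2 Hs2]].
  intros e He.
  destruct (represents_ksub_0 g s s' Hs Hs' (e / 2 / B1)) as [N1 H1]; [apply Rdiv_lt_0_compat; lra|].
  destruct (represents_ksub_0 h r r' Hr Hr' (e / 2 / B2)) as [N2 H2]; [apply Rdiv_lt_0_compat; lra|].
  exists (max N1 N2). intros k Hk. rewrite Cminus_0_r.
  eapply Rle_lt_trans; [apply Cmod_kip_sub|].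
  assert (knorm (ksub (s k) (s' k)) * knorm (r k) < e / 2).
  { apply (Rmult_lt_of_bound _ _ B1); [apply knorm_nonneg | split; auto using knorm_nonneg | lra | apply H1; lia]. }
  assert (knorm (s' k) * knorm (ksub (r k) (r' k)) < e / 2).
  { rewrite Rmult_comm.
    apply (Rmult_lt_of_bound _ _ B2); [apply knorm_nonneg | split; auto using knorm_nonneg | lra | apply H2; lia]. }
  lra.
Qed.

Lemma cip_spec g h s r : represents g s -> represents h r ->
  is_lim_Cseq (fun k => kip (s k) (r k)) (cip g h).
Proof.
  intros Hs Hr.
  pose proof (some_rep_spec g (ex_intro _ s Hs)) as Hg. pose proof (some_rep_spec h (ex_intro _ r Hr)) as Hh.
  assert (Hc : is_lim_Cseq (fun k => kip (some_rep g k) (some_rep h k)) (cip g h))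
    by (apply Clim_spec, kcauchy_kip; [apply Hg | apply Hh]).
  pose proof (filterlim_Cminus _ _ _ _ Hc (kip_represents_diff g h _ _ _ _ Hg Hs Hh Hr)) as Hd.
  rewrite Cminus_0_r in Hd. revert Hd. apply filterlim_ext. intros k. ring.
Qed.

Lemma cnorm_lim g h s r : represents g s -> represents h r ->
  forall eps, 0 < eps -> exists N, forall i, (N <= i)%nat ->
    Rabs (knorm (ksub (s i) (r i)) - cnorm (fun x => g x - h x)%C) < eps.
Proof.
  intros Hs Hr. pose proof (represents_ksub _ _ _ _ Hs Hr) as Hsr.
  exact (knorm_lim _ _ (cip_spec _ _ _ _ Hsr Hsr)).
Qed.

Lemma in_completion_0 : in_completion (fun _ => RtoC 0).
Proof. exists (fun _ => nil). apply (represents_const nil). Qed.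

Lemma in_completion_add f g : in_completion f -> in_completion g -> in_completion (fun x => f x + g x)%C.
Proof. intros [s Hs] [r Hr]. eexists. apply represents_app; eauto. Qed.

Lemma in_completion_scale a g : in_completion g -> in_completion (fun x => a * g x)%C.
Proof. intros [s Hs]. eexists. apply represents_scale; eauto. Qed.

Lemma represents_point t : represents (fun x => K x t) (fun _ => (t, RtoC 1) :: nil).
Proof.
  replace (fun x => K x t) with (kfun ((t, RtoC 1) :: nil)); [apply represents_const|].
  apply functional_extensionality. intros x. unfold kfun, lsum; simpl. ring.
Qed.

Lemma in_completion_point t : in_completion (fun x => K x t).
Proof. eexists. apply represents_point. Qed.

Lemma cip_add f g h : in_completion f -> in_completion g -> in_completion h ->
  cip (fun x => f x + g x)%C h = (cip f h + cip g h)%C.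
Proof.
  intros [s Hs] [r Hr] [q Hq].
  eapply is_lim_Cseq_unique; [apply (cip_spec _ _ _ _ (represents_app _ _ _ _ Hs Hr) Hq)|].
  eapply filterlim_ext; [|apply filterlim_Cplus; apply cip_spec; eauto]. intros k. symmetry. apply kip_app_l.
Qed.

Lemma cip_scale a f g : in_completion f -> in_completion g -> cip (fun x => a * f x)%C g = (a * cip f g)%C.
Proof.
  intros [s Hs] [r Hr]. eapply is_lim_Cseq_unique; [apply (cip_spec _ _ _ _ (represents_scale a _ _ Hs) Hr)|].
  eapply filterlim_ext; [|apply filterlim_Cscal, cip_spec; eauto]. intros k. symmetry. apply kip_scale_l.
Qed.

Lemma cip_sym f g : in_completion f -> in_completion g -> cip g f = Cconj (cip f g).
Proof.
  intros [s Hs] [r Hr]. eapply is_lim_Cseq_unique; [apply (cip_spec _ _ _ _ Hr Hs)|].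
  eapply filterlim_ext; [|apply filterlim_Cconj, cip_spec; eauto]. intros k. symmetry. apply kip_sym.
Qed.

Lemma cip_nonneg f : in_completion f -> 0 <= Re (cip f f).
Proof.
  intros [s Hs]. apply (is_lim_Cseq_nonneg_real _ _ (cip_spec _ _ _ _ Hs Hs)). intros. apply kip_nonneg.
Qed.

Lemma cip_point f t : in_completion f -> cip f (fun x => K x t) = f t.
Proof.
  intros [s Hs]. eapply is_lim_Cseq_unique; [apply (cip_spec _ _ _ _ Hs (represents_point t))|].
  eapply filterlim_ext; [|apply (proj2 Hs t)]. intros k. symmetry. apply kip_point.
Qed.

Lemma kfun_kcauchy w : kcauchy w -> forall t, exists l, is_lim_Cseq (fun k => kfun (w k) t) l.
Proof.
  intros Hw t. apply Cauchy_is_lim_Cseq. intros e He.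
  set (B := knorm ((t, RtoC 1) :: nil) + 1). pose proof (knorm_nonneg ((t, RtoC 1) :: nil)).
  destruct (Hw (e / B)) as [N HN]; [apply Rdiv_lt_0_compat; unfold B; lra|].
  exists N. intros k l Hk Hl. rewrite <- !kip_point, <- kip_ksub_l.
  eapply Rle_lt_trans; [apply Cmod_kip_le|].
  apply (Rmult_lt_of_bound _ _ B); [apply knorm_nonneg | unfold B; lra | unfold B; lra | auto].
Qed.

Lemma cip_definite f : in_completion f -> cip f f = RtoC 0 -> f = (fun _ => RtoC 0).
Proof.
  intros [s Hs] H0. pose proof (knorm_lim _ _ (cip_spec _ _ _ _ Hs Hs)) as Hn.
  rewrite H0 in Hn. simpl in Hn. rewrite sqrt_0 in Hn.
  apply functional_extensionality. intros t. eapply is_lim_Cseq_unique; [apply (proj2 Hs t)|].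
  rewrite is_lim_Cseq_eps. intros e He.
  set (B := knorm ((t, RtoC 1) :: nil) + 1). pose proof (knorm_nonneg ((t, RtoC 1) :: nil)).
  destruct (Hn (e / B)) as [N HN]; [apply Rdiv_lt_0_compat; unfold B; lra|].
  exists N. intros k Hk. specialize (HN k Hk).
  rewrite Rminus_0_r, Rabs_right in HN by apply Rle_ge, knorm_nonneg.
  rewrite Cminus_0_r, <- kip_point. eapply Rle_lt_trans; [apply Cmod_kip_le|].
  apply (Rmult_lt_of_bound _ _ B); [apply knorm_nonneg | unfold B; lra | unfold B; lra | auto].
Qed.

Section Completeness.
Variable u : nat -> X -> C.
Hypothesis u_in : forall k, in_completion (u k).
Hypothesis u_cauchy : forall eps, 0 < eps -> exists N, forall k l, (N <= k)%nat -> (N <= l)%nat ->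
  cnorm (fun x => u k x - u l x)%C < eps.

Let s k := some_rep (u k).

Let s_rep k : represents (u k) (s k).
Proof. apply some_rep_spec, u_in. Qed.

(* Diagonal selection: [w k] is a term of [s k] beyond which [s k] oscillates by less than 1/(k+1). *)
Let j k := epsilon (inhabits 0%nat) (fun N => forall i l, (N <= i)%nat -> (N <= l)%nat ->
  knorm (ksub (s k i) (s k l)) < / (INR k + 1)).

Let j_spec k i l : (j k <= i)%nat -> (j k <= l)%nat -> knorm (ksub (s k i) (s k l)) < / (INR k + 1).
Proof.
  revert i l. apply (epsilon_spec (inhabits 0%nat) (fun N => forall i l, (N <= i)%nat -> (N <= l)%nat ->
    knorm (ksub (s k i) (s k l)) < / (INR k + 1))).
  apply (proj1 (s_rep k)). apply RinvN_pos.
Qed.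

Let w k := s k (j k).

Let knorm_w_le k l :
  knorm (ksub (w k) (w l)) <= / (INR k + 1) + / (INR l + 1) + cnorm (fun x => u k x - u l x)%C.
Proof.
  apply Rle_plus_epsilon. intros d Hd. destruct (cnorm_lim _ _ _ _ (s_rep k) (s_rep l) d Hd) as [N HN].
  set (i := max N (max (j k) (j l))). specialize (HN i ltac:(unfold i; lia)). apply Rabs_def2 in HN.
  pose proof (knorm_ksub_triangle (w k) (s k i) (w l)). pose proof (knorm_ksub_triangle (s k i) (s l i) (w l)).
  pose proof (j_spec k (j k) i (le_n _) ltac:(unfold i; lia)).
  pose proof (j_spec l i (j l) ltac:(unfold i; lia) (le_n _)). unfold w in *. lra.
Qed.

Let w_kcauchy : kcauchy w.
Proof.
  intros e He. destruct (u_cauchy (e/3)) as [N0 H0]; [lra|]. destruct (inv_INR_S_lt (e/3)) as [N1 H1]; [lra|].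
  exists (max N0 N1). intros k l Hk Hl. pose proof (knorm_w_le k l).
  pose proof (H1 k ltac:(lia)). pose proof (H1 l ltac:(lia)). pose proof (H0 k l ltac:(lia) ltac:(lia)). lra.
Qed.

Let g t := Clim (fun k => kfun (w k) t).

Let w_rep : represents g w.
Proof. split; [exact w_kcauchy|]. intros t. apply Clim_spec, kfun_kcauchy, w_kcauchy. Qed.

Lemma completion_complete : exists g, in_completion g /\
  forall eps, 0 < eps -> exists N, forall k, (N <= k)%nat -> cnorm (fun x => u k x - g x)%C < eps.
Proof.
  exists g. split; [exists w; exact w_rep|].
  intros e He. destruct (u_cauchy (e/5)) as [N0 H0]; [lra|]. destruct (inv_INR_S_lt (e/5)) as [N1 H1]; [lra|].
  exists (max N0 N1). intros k Hk.
  destruct (cnorm_lim _ _ _ _ (s_rep k) w_rep (e/5)) as [N2 H2]; [lra|].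
  set (i := max (max N0 N1) (max N2 (j k))).
  specialize (H2 i ltac:(unfold i; lia)). apply Rabs_def2 in H2.
  pose proof (knorm_ksub_triangle (s k i) (w k) (w i)).
  pose proof (j_spec k i (j k) ltac:(unfold i; lia) (le_n _)).
  pose proof (knorm_w_le k i). pose proof (H1 k ltac:(lia)). pose proof (H1 i ltac:(unfold i; lia)).
  pose proof (H0 k i ltac:(lia) ltac:(unfold i; lia)). unfold w in *. lra.
Qed.

End Completeness.

(** * Functions with a bounded pairing lie in the completion *)

Section BoundedFunctional.
Variable f : X -> C.
Variable c : R.
Hypothesis c_nonneg : 0 <= c.

(* [kpair u] is what the inner product of [kfun u] with [f] must be if [f] is in the completion. *)
Definition kpair (u : list (X * C)) : C := lsum u (fun p => snd p * Cconj (f (fst p)))%C.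

Lemma kconj_kpair u : lsum (kconj u) (fun p => snd p * f (fst p))%C = Cconj (kpair u).
Proof.
  unfold kpair, kconj. rewrite lsum_map, lsum_conj. apply lsum_ext. intros. simpl.
  rewrite Cmult_conj, Cconj_conj. ring.
Qed.

Hypothesis kpair_bounded : forall u, Cmod (kpair u) <= c * knorm u.

Lemma kpair_app u v : kpair (u ++ v) = (kpair u + kpair v)%C.
Proof. apply lsum_app. Qed.

Lemma kpair_scale a u : kpair (kscale a u) = (a * kpair u)%C.
Proof. unfold kpair, kscale. rewrite lsum_map, <- lsum_mult_l. apply lsum_ext. intros; simpl; ring. Qed.

Let in_unit_ball_value (x : R) : Prop := exists u, knorm u <= 1 /\ x = Re (kpair u).

Let M_spec : { M : R | is_lub in_unit_ball_value M }.
Proof.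
  apply completeness.
  - exists c. intros x [u [Hu ->]]. eapply Rle_trans; [apply Rle_abs|]. eapply Rle_trans; [apply re_le_Cmod|].
    eapply Rle_trans; [apply kpair_bounded|]. pose proof (knorm_nonneg u). nra.
  - exists 0, nil. rewrite knorm_nil. split; [lra | reflexivity].
Defined.

Let M := proj1_sig M_spec.

Let M_nonneg : 0 <= M.
Proof. apply (proj1 (proj2_sig M_spec)). exists nil. rewrite knorm_nil. split; [lra | reflexivity]. Qed.

Let kpair_le_M v : Re (kpair v) <= M * knorm v.
Proof.
  pose proof (knorm_nonneg v). destruct (Req_dec (knorm v) 0) as [H0|H0].
  - rewrite H0, Rmult_0_r. eapply Rle_trans; [apply Rle_abs|]. eapply Rle_trans; [apply re_le_Cmod|].
    eapply Rle_trans; [apply kpair_bounded|]. rewrite H0. lra.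
  - assert (HS : in_unit_ball_value (Re (kpair (kscale (RtoC (/ knorm v)) v)))).
    { eexists. split; [|reflexivity]. rewrite knorm_scale, Cmod_R, Rabs_right.
      - rewrite Rinv_l by lra. lra.
      - apply Rle_ge, Rlt_le, Rinv_0_lt_compat. lra. }
    apply (proj1 (proj2_sig M_spec)) in HS. fold M in HS. rewrite kpair_scale, re_scal_l in HS.
    apply (Rmult_le_compat_l (knorm v)) in HS; [|lra].
    replace (knorm v * (/ knorm v * Re (kpair v))) with (Re (kpair v)) in HS by (field; lra). lra.
Qed.

Let useq k : list (X * C) :=
  epsilon (inhabits nil) (fun u => knorm u <= 1 /\ M - / (INR k + 1) < Re (kpair u)).

Let useq_spec k : knorm (useq k) <= 1 /\ M - / (INR k + 1) < Re (kpair (useq k)).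
Proof.
  apply (epsilon_spec (inhabits nil) (fun u => knorm u <= 1 /\ M - / (INR k + 1) < Re (kpair u))).
  apply NNPP. intros H. pose proof (RinvN_pos k).
  assert (Hub : is_upper_bound in_unit_ball_value (M - / (INR k + 1))).
  { intros x [u [Hu ->]]. apply Rnot_lt_le. intros Hl. apply H. exists u. auto. }
  apply (proj2 (proj2_sig M_spec)) in Hub. fold M in Hub. lra.
Qed.

Let useq_ksub_sq k l :
  M * M * (knorm (ksub (useq k) (useq l)) * knorm (ksub (useq k) (useq l)))
  <= 4 * M * (/ (INR k + 1) + / (INR l + 1)).
Proof.
  destruct (useq_spec k) as [Hk1 Hk2]. destruct (useq_spec l) as [Hl1 Hl2].
  set (a := useq k) in *. set (b := useq l) in *. set (e := / (INR k + 1) + / (INR l + 1)).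
  pose proof (RinvN_pos k). pose proof (RinvN_pos l).
  pose proof (kip_parallelogram a b) as HP. apply (f_equal Re) in HP. simpl in HP. rewrite <- !knorm_sq in HP.
  pose proof (knorm_nonneg a). pose proof (knorm_nonneg b). pose proof (knorm_nonneg (ksub a b)).
  pose proof (knorm_nonneg (a ++ b)). set (x := knorm (ksub a b)) in *. set (y := knorm (a ++ b)) in *.
  assert (Hy : Re (kpair (a ++ b)) <= M * y) by apply kpair_le_M. rewrite kpair_app in Hy. simpl in Hy.
  assert (x * x + y * y <= 4) by nra.
  destruct (Rle_dec (2 * M - e) 0).
  - assert (M * M * (x * x) <= M * M * 4) by (apply Rmult_le_compat_l; nra). unfold e in *. nra.
  - assert (2 * M - e <= M * y) by (unfold e, Re in *; simpl in *; lra).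
    assert ((2 * M - e) * (2 * M - e) <= (M * y) * (M * y)) by (apply Rmult_le_compat; lra).
    assert (M * M * (x * x) <= M * M * (4 - y * y)) by (apply Rmult_le_compat_l; nra).
    unfold e in *. nra.
Qed.

(* first-order optimality of [useq k] in the direction [w] *)
Let useq_variational w k lam : 0 < lam ->
  lam * (Re (kpair w) - M * Re (kip w (useq k))) <= / (INR k + 1) + M * (lam * lam) * Re (kip w w) / 2.
Proof.
  intros Hl. destruct (useq_spec k) as [Hk1 Hk2]. set (u := useq k) in *.
  pose proof (kpair_le_M (u ++ kscale (RtoC lam) w)) as HB. rewrite kpair_app, kpair_scale in HB.
  pose proof (knorm_nonneg (u ++ kscale (RtoC lam) w)). set (y := knorm (u ++ kscale (RtoC lam) w)) in *.
  assert (Hy : y * y = Re (kip u u) + 2 * lam * Re (kip w u) + lam * lam * Re (kip w w)).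
  { unfold y. rewrite knorm_sq, kip_app_l, !kip_app_r, !kip_scale_l, !kip_scale_r, (kip_sym u w), (kip_real w).
    destruct (kip w u) as [a1 a2]. unfold Re, Cplus, Cmult, Cconj, RtoC; simpl. ring. }
  pose proof (knorm_nonneg u). assert (Re (kip u u) <= 1) by (rewrite <- knorm_sq; nra).
  pose proof (kip_nonneg w) as [_ Hw].
  assert (Hwu : Re (kip w u) = Re (kip u w)) by (rewrite (kip_sym u w); destruct (kip u w); reflexivity).
  set (x := 2 * lam * Re (kip w u) + lam * lam * Re (kip w w)) in *.
  assert (y <= 1 + x / 2) by (assert (y * y <= 1 + x) by (unfold x; lra); nra).
  assert (M * y <= M * (1 + x / 2)) by (apply Rmult_le_compat_l; lra).
  unfold x in *. unfold Re in *. simpl in *. nra.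
Qed.

Let useq_variational_lim w eps : 0 < eps ->
  exists N, forall k, (N <= k)%nat -> Re (kpair w) - M * Re (kip w (useq k)) < eps.
Proof.
  intros He. pose proof (kip_nonneg w) as [_ Hw]. set (W := Re (kip w w)) in *.
  set (lam := eps / (M * W + 1)). assert (Hl : 0 < lam) by (unfold lam; apply Rdiv_lt_0_compat; nra).
  destruct (inv_INR_S_lt (lam * eps / 2)) as [N HN]; [nra|]. exists N. intros k Hk.
  pose proof (useq_variational w k lam Hl) as HV. specialize (HN k Hk).
  assert (HQ : M * (lam * lam) * W / 2 < lam * (eps / 2)).
  { assert (0 < M * W + 1) by nra.
    replace (M * (lam * lam) * W / 2) with (lam * (eps / 2) * (M * W / (M * W + 1))) by (unfold lam; field; lra).
    rewrite <- (Rmult_1_r (lam * (eps / 2))) at 2. apply Rmult_lt_compat_l; [nra|].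
    apply (Rmult_lt_reg_r (M * W + 1)); [lra|]. field_simplify; lra. }
  apply (Rmult_lt_reg_l lam); [exact Hl|]. fold W in HV. lra.
Qed.

Let kpair_lim w : is_lim_Cseq (fun k => RtoC M * kip w (useq k))%C (kpair w).
Proof.
  rewrite is_lim_Cseq_eps. intros e He.
  (* the real-part estimate applied to [a w] for a = 1, -1, i, -i controls both coordinates *)
  assert (Ha : forall a : C, exists N, forall k, (N <= k)%nat ->
    Re (a * (kpair w - RtoC M * kip w (useq k)))%C < e / 2).
  { intros a. destruct (useq_variational_lim (kscale a w) (e/2)) as [N HN]; [lra|]. exists N. intros k Hk.
    specialize (HN k Hk). rewrite kpair_scale, kip_scale_l in HN.
    destruct (kpair w) as [p1 p2], (kip w (useq k)) as [q1 q2], a as [a1 a2].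
    unfold Re, Cmult, Cminus, Cplus, Copp, RtoC in *. simpl in *. nra. }
  destruct (Ha (RtoC 1)) as [N1 H1]. destruct (Ha (RtoC (-1))) as [N2 H2].
  destruct (Ha Ci) as [N3 H3]. destruct (Ha (- Ci)%C) as [N4 H4].
  exists (max (max N1 N2) (max N3 N4)). intros k Hk.
  specialize (H1 k ltac:(lia)). specialize (H2 k ltac:(lia)). specialize (H3 k ltac:(lia)).
  specialize (H4 k ltac:(lia)).
  rewrite <- Cmod_opp.
  replace (- (RtoC M * kip w (useq k) - kpair w))%C with (kpair w - RtoC M * kip w (useq k))%C by ring.
  destruct (kpair w) as [p1 p2], (kip w (useq k)) as [q1 q2].
  unfold Re, Im, Cmult, Cminus, Cplus, Copp, RtoC, Ci in *. simpl in *.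
  assert (Hre : Rabs (p1 + - (M * q1 - 0 * q2)) < e / 2) by (apply Rabs_def1; lra).
  assert (Him : Rabs (p2 + - (M * q2 + 0 * q1)) < e / 2) by (apply Rabs_def1; lra).
  pose proof (Cmod_le_Rabs_re_im (p1 + - (M * q1 - 0 * q2), p2 + - (M * q2 + 0 * q1))). simpl in *. lra.
Qed.

Lemma in_completion_of_bounded : in_completion f.
Proof.
  exists (fun k => kscale (RtoC M) (useq k)). split.
  - intros e He. destruct (inv_INR_S_lt (e * e / (8 * M + 8))) as [N HN]; [apply Rdiv_lt_0_compat; nra|].
    exists N. intros k l Hk Hl.
    rewrite (kequiv_knorm _ (kscale (RtoC M) (ksub (useq k) (useq l)))) by solve_kequiv.
    rewrite knorm_scale, Cmod_R, Rabs_right by lra.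
    pose proof (useq_ksub_sq k l). pose proof (HN k Hk). pose proof (HN l Hl).
    pose proof (knorm_nonneg (ksub (useq k) (useq l))). set (x := knorm (ksub (useq k) (useq l))) in *.
    assert (M * x * (M * x) < e * e); [|assert (0 <= M * x) by nra; nra].
    assert (4 * M * (2 * (e * e / (8 * M + 8))) < e * e).
    { replace (4 * M * (2 * (e * e / (8 * M + 8)))) with (e * e * (M / (M + 1))) by (field; lra).
      rewrite <- (Rmult_1_r (e * e)) at 2. apply Rmult_lt_compat_l; [nra|].
      apply (Rmult_lt_reg_r (M + 1)); [lra|]. field_simplify; lra. }
    nra.
  - intros t. pose proof (filterlim_Cconj _ _ (kpair_lim ((t, RtoC 1) :: nil))) as Hlim.
    replace (f t) with (Cconj (kpair ((t, RtoC 1) :: nil))).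
    + revert Hlim. apply filterlim_ext. intros k.
      rewrite Cmult_conj, kfun_scale, <- kip_point, (kip_sym ((t, RtoC 1) :: nil) (useq k)).
      f_equal. apply injective_projections; simpl; ring.
    + unfold kpair, lsum. simpl. destruct (f t). apply injective_projections; simpl; ring.
Qed.

End BoundedFunctional.

End KernelCombinations.

Lemma kform_rank_one_update {X} (K : X -> X -> C) (f : X -> C) (a : R) pts :
  kform (fun s t => RtoC a * K s t - f s * Cconj (f t))%C pts =
  (RtoC a * kform K pts
   - lsum pts (fun p => snd p * f (fst p)) * Cconj (lsum pts (fun p => snd p * f (fst p))))%C.
Proof.
  unfold kform. rewrite lsum_conj, lsum_mult, <- lsum_mult_l, <- lsum_sub. apply lsum_ext. intros p _.
  rewrite <- lsum_mult_l, <- lsum_sub. apply lsum_ext. intros r _. rewrite Cmult_conj. ring.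
Qed.

Definition completion_RKHS (rho : R) (K : Hrho rho -> Hrho rho -> C) (Hpsd : psd_kernel K) : RKHS rho K :=
  {| mem := in_completion K;
     ip := cip K;
     mem0 := in_completion_0 K Hpsd;
     memD := in_completion_add K Hpsd;
     memZ := in_completion_scale K Hpsd;
     ipD := cip_add K Hpsd;
     ipZ := cip_scale K Hpsd;
     ip_sym := cip_sym K Hpsd;
     ip_pos := cip_nonneg K Hpsd;
     ip_def := cip_definite K Hpsd;
     complete := completion_complete K Hpsd;
     kmem := in_completion_point K Hpsd;
     repro := cip_point K Hpsd |}.

Lemma in_RKHS_of_psd rho (K : Hrho rho -> Hrho rho -> C) f c : psd_kernel K -> 0 <= c ->
  psd_kernel (fun s t => RtoC (c ^ 2) * K s t - f s * Cconj (f t))%C -> in_RKHS rho K f.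
Proof.
  intros Hpsd Hc Hf. exists (completion_RKHS rho K Hpsd). apply (in_completion_of_bounded K Hpsd f c Hc).
  intros u. destruct (proj1 (psd_kernelE _) Hf (kconj u)) as [_ Hnn].
  rewrite kform_rank_one_update, <- kip_kform, kconj_kpair in Hnn.
  replace (Re (RtoC (c ^ 2) * kip K u u - Cconj (kpair f u) * Cconj (Cconj (kpair f u)))%C)
    with (c ^ 2 * Re (kip K u u) - Cmod (kpair f u) ^ 2) in Hnn
    by (rewrite Cconj_conj, Cmod2_alt; destruct (kpair f u), (kip K u u); unfold Re, Im; simpl; ring).
  rewrite <- (knorm_sq K Hpsd u) in Hnn. pose proof (knorm_nonneg K u) as Hu.
  pose proof (Cmod_ge_0 (kpair f u)). pose proof (Rmult_le_pos _ _ Hc Hu). nra.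
Qed.

Section RKHSFacts.
Variable rho : R.
Variable K : Hrho rho -> Hrho rho -> C.
Variable H : RKHS rho K.
Notation memH := (mem rho K H).
Notation ipH := (ip rho K H).

Lemma kfun_cons u p : kfun K (p :: u) = fadd (fscal (snd p) (fun s => K s (fst p))) (kfun K u).
Proof. reflexivity. Qed.

Lemma rkhs_mem_kfun u : memH (kfun K u).
Proof.
  induction u as [|p u IH]; [apply mem0|].
  rewrite kfun_cons. apply memD; [apply memZ, kmem | exact IH].
Qed.

Lemma rkhs_ip_kfun u g : memH g -> ipH (kfun K u) g = kpair g u.
Proof.
  intros Hg. induction u as [|p u IH].
  - replace (kfun K nil) with (fscal (RtoC 0) (@fzero rho))
      by (apply functional_extensionality; intros; unfold fscal, fzero, kfun, lsum; simpl; ring).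
    rewrite ipZ; [unfold kpair, lsum; simpl; ring | apply mem0 | exact Hg].
  - rewrite kfun_cons, ipD, ipZ, IH, ip_sym, repro; auto using kmem, memZ, rkhs_mem_kfun.
Qed.

Lemma rkhs_ip_real g : memH g -> ipH g g = RtoC (Re (ipH g g)).
Proof.
  intros Hg. pose proof (ip_sym rho K H g g Hg Hg) as E. apply injective_projections; simpl; auto.
  destruct (ipH g g) as [x y]. unfold Cconj in E. simpl in *. injection E. lra.
Qed.

Lemma rkhs_CS g h : memH g -> memH h -> Cmod (ipH g h) ^ 2 <= Re (ipH g g) * Re (ipH h h).
Proof.
  intros Hg Hh. apply Cmod_sq_le_of_quadratic; [apply ip_pos; auto|]. intros z.
  assert (Hm : memH (fadd g (fscal (- z)%C h))) by (apply memD; [|apply memZ]; auto).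
  pose proof (ip_pos rho K H _ Hm) as HP.
  rewrite ipD, ipZ, (ip_sym rho K H _ g), (ip_sym rho K H _ h), ipD, ipZ, ipD, ipZ, (ip_sym rho K H g h) in HP;
    auto using memD, memZ.
  rewrite (rkhs_ip_real g), (rkhs_ip_real h) in HP by auto.
  eapply Rle_trans; [exact HP|]. right.
  rewrite !Cplus_conj, !Cmult_conj, !Cconj_conj, Copp_conj.
  destruct (ipH g h) as [w1 w2]. destruct z as [z1 z2]. unfold Re, Cplus, Cminus, Cmult, Copp, Cconj, RtoC.
  simpl. ring.
Qed.

Lemma psd_of_in_RKHS f : memH f ->
  psd_kernel (fun s t => RtoC (Re (ipH f f)) * K s t - f s * Cconj (f t))%C.
Proof.
  intros Hf. apply psd_kernelE. intros pts. set (g := kfun K (kconj pts)).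
  assert (Hg : memH g) by apply rkhs_mem_kfun.
  assert (Hgg : ipH g g = Cconj (kform K pts)).
  { unfold g at 1. rewrite rkhs_ip_kfun by exact Hg. unfold kpair, kform, kconj.
    rewrite lsum_map, lsum_conj. apply lsum_ext. intros p _. unfold g, kfun, kconj. simpl.
    rewrite lsum_map, !lsum_conj, <- lsum_mult_l. apply lsum_ext. intros r _. simpl.
    rewrite !Cmult_conj, Cconj_conj. ring. }
  assert (Hgf : ipH g f = Cconj (lsum pts (fun p => snd p * f (fst p)))%C).
  { unfold g. rewrite rkhs_ip_kfun by exact Hf. unfold kpair, kconj.
    rewrite lsum_map, lsum_conj. apply lsum_ext. intros p _. simpl. rewrite Cmult_conj. reflexivity. }
  pose proof (rkhs_CS g f Hg Hf) as HCS. rewrite Hgg, Hgf, Cmod_conj in HCS.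
  pose proof (rkhs_ip_real g Hg) as Hreal. rewrite Hgg in Hreal.
  assert (HK : Im (kform K pts) = 0).
  { apply (f_equal Im) in Hreal. simpl in Hreal. destruct (kform K pts). simpl in *. lra. }
  rewrite kform_rank_one_update.
  set (S := lsum pts (fun p => snd p * f (fst p))%C) in *.
  set (a := Re (ipH f f)) in *. pose proof (Cmod2_alt S).
  destruct (kform K pts) as [k1 k2], S as [s1 s2]. unfold nonneg_real, Re, Im in *. simpl in *. split; nra.
Qed.

End RKHSFacts.

Theorem in_RKHS_iff_psd_kernel rho (K : Hrho rho -> Hrho rho -> C) f : psd_kernel K ->
  in_RKHS rho K f <->
  exists c, 0 <= c /\ psd_kernel (fun s t => RtoC (c ^ 2) * K s t - f s * Cconj (f t))%C.
Proof.
  intros Hpsd. split.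
  - intros [H Hf]. exists (sqrt (Re (ip rho K H f f))). split; [apply sqrt_pos|].
    rewrite pow2_sqrt by (apply ip_pos; exact Hf). apply psd_of_in_RKHS, Hf.
  - intros [c [Hc Hf]]. exact (in_RKHS_of_psd rho K f c Hpsd Hc Hf).
Qed.

(** * Dirichlet series kernels *)

Definition mform (x : nat -> nat -> C) (F : list nat) (w : nat -> C) : C :=
  lsum F (fun m => lsum F (fun n => Cconj (w m) * x m n * w n))%C.

Lemma formally_psdE x : formally_psd x <-> forall F w, NoDup F -> nonneg_real (mform x F w).
Proof. reflexivity. Qed.

Lemma mform_lsum {A} x M (P : list A) (g : A -> nat -> C) :
  mform x M (fun n => Cconj (lsum P (fun p => g p n))) =
  lsum P (fun p => lsum P (fun r => lsum M (fun m => lsum M (fun n => g p m * x m n * Cconj (g r n)))))%C.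
Proof.
  unfold mform.
  transitivity (lsum M (fun m => lsum M (fun n =>
    lsum P (fun p => lsum P (fun r => g p m * x m n * Cconj (g r n))))))%C.
  { apply lsum_ext. intros m _. apply lsum_ext. intros n _.
    rewrite Cconj_conj, lsum_conj, <- lsum_mult_r, lsum_mult. apply lsum_ext. intros p _.
    apply lsum_ext. intros r _. ring. }
  set (T := fun p r m n => (g p m * x m n * Cconj (g r n))%C).
  transitivity (lsum M (fun m => lsum P (fun p => lsum M (fun n => lsum P (fun r => T p r m n))))).
  { apply lsum_ext. intros m _. apply lsum_comm. }
  rewrite lsum_comm. apply lsum_ext. intros p _.
  transitivity (lsum M (fun m => lsum P (fun r => lsum M (fun n => T p r m n)))).
  { apply lsum_ext. intros m _. apply lsum_comm. }
  apply lsum_comm.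
Qed.

Lemma mform_lim x M (v : nat -> nat -> C) (vl : nat -> C) :
  (forall n, In n M -> is_lim_Cseq (fun P => v P n) (vl n)) ->
  is_lim_Cseq (fun P => mform x M (v P)) (mform x M vl).
Proof.
  intros H. apply filterlim_lsum. intros m Hm. apply filterlim_lsum. intros n Hn.
  apply filterlim_Cmult; [|apply H, Hn].
  apply filterlim_Cmult; [apply filterlim_Cconj, H, Hm | apply filterlim_Cconst].
Qed.

Lemma dsum_lsum x M N : dsum x M N = lsum (seq 0 M) (fun m => lsum (seq 0 N) (x m)).
Proof. unfold dsum. rewrite csum_lsum. apply lsum_ext. intros. apply csum_lsum. Qed.

Definition is_lim_Cseq2 (w : nat -> nat -> C) (l : C) : Prop :=
  filterlim (fun p => w (fst p) (snd p)) (filter_prod eventually eventually) (locally l).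

Lemma dseries_to_lim x L : dseries_to x L <-> is_lim_Cseq2 (dsum x) L.
Proof.
  unfold is_lim_Cseq2. rewrite filterlim_locally_ball_norm. split.
  - intros H [eps Heps]. destruct (H eps Heps) as [N0 HN0].
    apply (Filter_prod _ _ _ (fun n => (N0 <= n)%nat) (fun n => (N0 <= n)%nat));
      [exists N0; auto | exists N0; auto|].
    intros M N HM HN. exact (HN0 M N HM HN).
  - intros H eps Heps. destruct (H (mkposreal eps Heps)) as [P Q [N1 HP] [N2 HQ] HPQ].
    exists (max N1 N2). intros M N HM HN. apply (HPQ M N); [apply HP | apply HQ]; lia.
Qed.

Lemma dseries_to_diag x L : dseries_to x L -> is_lim_Cseq (fun N => dsum x N N) L.
Proof.
  rewrite is_lim_Cseq_eps. intros H e He. destruct (H e He) as [N HN]. exists N. intros. apply HN; auto.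
Qed.

Lemma is_lim_Cseq2_mult u v A B : is_lim_Cseq u A -> is_lim_Cseq v B ->
  is_lim_Cseq2 (fun M N => u M * v N)%C (A * B)%C.
Proof.
  intros Hu Hv. apply filterlim_Cmult.
  - intros P HP.
    exact (Filter_prod _ _ _ (fun n => P (u n)) (fun _ => True) (Hu P HP) filter_true (fun _ _ H _ => H)).
  - intros P HP.
    exact (Filter_prod _ _ _ (fun _ => True) (fun n => P (v n)) filter_true (Hv P HP) (fun _ _ _ H => H)).
Qed.

Lemma regularly_cv_to_ext x y L : (forall m n, x m n = y m n) -> regularly_cv_to x L -> regularly_cv_to y L.
Proof.
  intros Hxy. replace y with x; [auto|]. apply functional_extensionality. intros m.
  apply functional_extensionality. auto.
Qed.

Lemma regularly_cv_to_lin (a : C) x y L L' : regularly_cv_to x L -> regularly_cv_to y L' ->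
  regularly_cv_to (fun m n => a * x m n - y m n)%C (a * L - L')%C.
Proof.
  assert (Hcsum : forall (u v : nat -> C) N, csum (fun n => a * u n - v n)%C N = (a * csum u N - csum v N)%C).
  { intros u v N. rewrite !csum_lsum, lsum_sub, lsum_mult_l. reflexivity. }
  intros [Hx [Hxr Hxc]] [Hy [Hyr Hyc]]. split; [|split].
  - rewrite dseries_to_lim in *.
    eapply filterlim_ext; [|apply filterlim_Cminus; [apply filterlim_Cscal, Hx | apply Hy]].
    intros [M N]. simpl. rewrite !dsum_lsum, <- lsum_mult_l, <- lsum_sub. apply lsum_ext. intros.
    rewrite <- lsum_mult_l, <- lsum_sub. reflexivity.
  - intros m. destruct (Hxr m) as [l1 H1], (Hyr m) as [l2 H2]. exists (a * l1 - l2)%C.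
    rewrite series_to_lim in *. eapply filterlim_ext; [intros N; symmetry; apply Hcsum|].
    apply filterlim_Cminus; [apply filterlim_Cscal, H1 | apply H2].
  - intros n. destruct (Hxc n) as [l1 H1], (Hyc n) as [l2 H2]. exists (a * l1 - l2)%C.
    rewrite series_to_lim in *. eapply filterlim_ext; [intros N; symmetry; apply Hcsum|].
    apply filterlim_Cminus; [apply filterlim_Cscal, H1 | apply H2].
Qed.

Lemma regularly_cv_to_prod u v A B : series_to u A -> series_to v B ->
  regularly_cv_to (fun m n => u m * Cconj (v n))%C (A * Cconj B)%C.
Proof.
  rewrite !series_to_lim. intros Hu Hv.
  assert (Hc : is_lim_Cseq (fun N => Cconj (csum v N)) (Cconj B)) by (apply filterlim_Cconj, Hv).
  split; [|split].
  - rewrite dseries_to_lim. eapply filterlim_ext; [|apply (is_lim_Cseq2_mult _ _ _ _ Hu Hc)].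
    intros [M N]. simpl. rewrite dsum_lsum, !csum_lsum, lsum_conj, lsum_mult. reflexivity.
  - intros m. exists (u m * Cconj B)%C. rewrite series_to_lim.
    eapply filterlim_ext; [|apply (filterlim_Cscal (u m) _ _ Hc)].
    intros N. simpl. rewrite !csum_lsum, lsum_conj, lsum_mult_l. reflexivity.
  - intros n. exists (A * Cconj (v n))%C. rewrite series_to_lim.
    eapply filterlim_ext; [|apply (filterlim_Cmult _ _ _ _ Hu (filterlim_Cconst (Cconj (v n))))].
    intros N. simpl. rewrite !csum_lsum, lsum_mult_r. reflexivity.
Qed.

Lemma npow_neg_conj n z : npow_neg n (Cconj z) = Cconj (npow_neg n z).
Proof.
  unfold npow_neg. destruct z as [x y]. simpl.
  replace (- y * ln (INR n)) with (- (y * ln (INR n))) by ring. rewrite cos_neg, sin_neg.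
  apply injective_projections; simpl; ring.
Qed.

Lemma is_dirichlet_kernel_rank_one_update rho a K fh f (c : R) :
  is_dirichlet_kernel rho a K ->
  (forall s : Hrho rho, series_to (fun n => fh n * npow_neg (S n) (proj1_sig s))%C (f s)) ->
  is_dirichlet_kernel rho (fun m n => RtoC (c ^ 2) * a m n - fh m * Cconj (fh n))%C
                          (fun s t => RtoC (c ^ 2) * K s t - f s * Cconj (f t))%C.
Proof.
  intros HK Hf s t. eapply regularly_cv_to_ext;
    [|exact (regularly_cv_to_lin _ _ _ _ _ (HK s t) (regularly_cv_to_prod _ _ _ _ (Hf s) (Hf t)))].
  intros m n. unfold kterm. rewrite npow_neg_conj, Cmult_conj. ring.
Qed.

(** * Recovering the coefficient matrix from the kernel *)

Lemma series_cv_terms_bounded u : series_cv u -> exists B, 0 < B /\ forall n, Cmod (u n) <= B.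
Proof.
  intros [L HL]. rewrite series_to_lim in HL. destruct (is_lim_Cseq_bounded _ _ HL) as [B [HB HuB]].
  exists (2 * B). split; [lra|]. intros n.
  replace (u n) with (csum u (S n) - csum u n)%C by (simpl; ring).
  eapply Rle_trans; [apply Cmod_triangle|]. rewrite Cmod_opp. pose proof (HuB (S n)). pose proof (HuB n). lra.
Qed.

Lemma rows_bounded (y : nat -> nat -> C) N : (forall m, series_cv (y m)) ->
  exists B, 0 < B /\ forall m n, (m < N)%nat -> Cmod (y m n) <= B.
Proof.
  intros H. induction N as [|N [B [HB HyB]]]; [exists 1; split; [lra | intros; lia]|].
  destruct (series_cv_terms_bounded _ (H N)) as [B' [HB' HyB']].
  exists (Rmax B B'). split; [eapply Rlt_le_trans; [apply HB | apply Rmax_l]|].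
  intros m n Hm. destruct (Nat.eq_dec m N) as [->|Hne]; [eapply Rle_trans; [apply HyB' | apply Rmax_r]|].
  eapply Rle_trans; [apply HyB; lia | apply Rmax_l].
Qed.

(* Beyond the Pringsheim index the terms are second differences of convergent partial sums;
   the finitely many rows and columns below it are convergent series. *)
Lemma regularly_cv_to_bounded y L : regularly_cv_to y L -> exists B, 0 < B /\ forall m n, Cmod (y m n) <= B.
Proof.
  intros [Hd [Hr Hc]]. destruct (Hd 1 Rlt_0_1) as [N HN].
  destruct (rows_bounded y N Hr) as [B1 [HB1 Hy1]].
  destruct (rows_bounded (fun n m => y m n) N Hc) as [B2 [HB2 Hy2]].
  exists (B1 + B2 + 4). split; [lra|]. intros m n.
  destruct (Nat.lt_ge_cases m N) as [Hm|Hm]; [pose proof (Hy1 m n Hm); lra|].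
  destruct (Nat.lt_ge_cases n N) as [Hn|Hn]; [pose proof (Hy2 n m Hn); lra|].
  replace (y m n) with
    ((dsum y (S m) (S n) - L) - (dsum y m (S n) - L) - (dsum y (S m) n - L) + (dsum y m n - L))%C
    by (unfold dsum; simpl; ring).
  pose proof (HN (S m) (S n) ltac:(lia) ltac:(lia)). pose proof (HN m (S n) ltac:(lia) ltac:(lia)).
  pose proof (HN (S m) n ltac:(lia) ltac:(lia)). pose proof (HN m n ltac:(lia) ltac:(lia)).
  set (a1 := (dsum y (S m) (S n) - L)%C) in *. set (a2 := (dsum y m (S n) - L)%C) in *.
  set (a3 := (dsum y (S m) n - L)%C) in *. set (a4 := (dsum y m n - L)%C) in *.
  pose proof (Cmod_triangle (a1 - a2 - a3) a4). pose proof (Cmod_triangle (a1 - a2) (- a3)).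
  pose proof (Cmod_triangle a1 (- a2)). rewrite Cmod_opp in *. unfold Cminus in *. lra.
Qed.

Definition cexp (t : R) : C := (cos t, sin t).

Lemma cexp_add s t : (cexp s * cexp t)%C = cexp (s + t).
Proof. unfold cexp. rewrite cos_plus, sin_plus. apply injective_projections; simpl; ring. Qed.

Lemma Cmod_cexp t : Cmod (cexp t) = 1.
Proof.
  unfold cexp, Cmod. simpl.
  replace (cos t * (cos t * 1) + sin t * (sin t * 1)) with 1 by (pose proof (sin2_cos2 t); unfold Rsqr in *; lra).
  apply sqrt_1.
Qed.

Lemma cexp_0 : cexp 0 = RtoC 1.
Proof. unfold cexp. rewrite cos_0, sin_0. reflexivity. Qed.

Definition cexp_mean (P : nat) (t : R) : C :=
  (RtoC (/ INR (S P)) * lsum (seq 0 (S P)) (fun p => cexp (INR p * t)))%C.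

Lemma INR_S_pos n : 0 < INR (S n).
Proof. rewrite S_INR. pose proof (pos_INR n). lra. Qed.

Lemma lsum_1 {A} (l : list A) : lsum l (fun _ => RtoC 1) = RtoC (INR (length l)).
Proof.
  induction l as [|a l IH]; [reflexivity|]. rewrite lsum_cons, IH. simpl length. rewrite S_INR.
  apply injective_projections; simpl; ring.
Qed.

Lemma cexp_mean_0 P : cexp_mean P 0 = RtoC 1.
Proof.
  unfold cexp_mean. rewrite (lsum_ext _ _ (fun _ => RtoC 1)) by (intros; rewrite Rmult_0_r; apply cexp_0).
  rewrite lsum_1, length_seq. pose proof (INR_S_pos P). set (n := INR (S P)) in *.
  apply injective_projections; simpl; field; lra.
Qed.

Lemma Cmod_cexp_mean P t : Cmod (cexp_mean P t) <= 1.
Proof.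
  unfold cexp_mean. pose proof (INR_S_pos P).
  rewrite Cmod_mult, Cmod_R, Rabs_right by (apply Rle_ge, Rlt_le, Rinv_0_lt_compat; lra).
  eapply Rle_trans; [apply Rmult_le_compat_l; [apply Rlt_le, Rinv_0_lt_compat; lra | apply Cmod_lsum]|].
  cbv beta. replace (rsum (seq 0 (S P)) (fun p => Cmod (cexp (INR p * t)))) with (INR (S P)).
  - rewrite Rinv_l; lra.
  - rewrite <- (length_seq (S P) 0) at 1. generalize (seq 0 (S P)). intros l.
    induction l as [|p l IH]; [reflexivity|].
    change (INR (length (p :: l)) = Cmod (cexp (INR p * t)) + rsum l (fun p => Cmod (cexp (INR p * t)))).
    rewrite Cmod_cexp, <- IH. simpl length. rewrite S_INR. ring.
Qed.

Lemma cexp_geometric t n :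
  (lsum (seq 0 n) (fun p => cexp (INR p * t)) * (1 - cexp t))%C = (1 - cexp (INR n * t))%C.
Proof.
  induction n as [|n IH].
  - simpl. rewrite Rmult_0_l, cexp_0. unfold lsum; simpl. ring.
  - replace (cexp (INR (S n) * t)) with (cexp (INR n * t) * cexp t)%C by (rewrite cexp_add, S_INR; f_equal; ring).
    rewrite seq_S, lsum_app, Cmult_plus_distr_r, IH. unfold lsum; simpl. ring.
Qed.

Lemma cexp_mean_lim t : cexp t <> RtoC 1 -> is_lim_Cseq (fun P => cexp_mean P t) (RtoC 0).
Proof.
  intros Hne. set (d := Cmod (1 - cexp t)%C).
  assert (Hd : 0 < d).
  { apply Cmod_gt_0. intros He. apply Hne. replace (cexp t) with (1 - (1 - cexp t))%C by ring. rewrite He. ring. }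
  rewrite is_lim_Cseq_eps. intros e He. destruct (inv_INR_S_lt (e * d / 2)) as [N HN]; [nra|].
  exists N. intros P HP. rewrite Cminus_0_r. unfold cexp_mean. rewrite Cmod_mult, Cmod_R.
  assert (HS : Cmod (lsum (seq 0 (S P)) (fun p => cexp (INR p * t))) <= 2 / d).
  { pose proof (cexp_geometric t (S P)) as Hg. apply (f_equal Cmod) in Hg. rewrite Cmod_mult in Hg. fold d in Hg.
    assert (Cmod (1 - cexp (INR (S P) * t))%C <= 2).
    { unfold Cminus. eapply Rle_trans; [apply Cmod_triangle|]. rewrite Cmod_opp, Cmod_cexp, Cmod_1. lra. }
    apply (Rmult_le_reg_r d); [exact Hd|]. replace (2 / d * d) with 2 by (field; lra). lra. }
  specialize (HN P HP). pose proof (pos_INR P). rewrite S_INR in *.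
  rewrite Rabs_right by (apply Rle_ge, Rlt_le, Rinv_0_lt_compat; lra).
  apply Rle_lt_trans with (/ (INR P + 1) * (2 / d)).
  { apply Rmult_le_compat_l; [apply Rlt_le, Rinv_0_lt_compat; lra | exact HS]. }
  apply Rlt_le_trans with (e * d / 2 * (2 / d)).
  { apply Rmult_lt_compat_r; [apply Rdiv_lt_0_compat; lra | exact HN]. }
  right. field. lra.
Qed.

Definition inv_sq (m : nat) : R := / ((INR m + 1) * (INR m + 1)).

Lemma inv_sq_pos m : 0 <= inv_sq m.
Proof. unfold inv_sq. pose proof (pos_INR m). apply Rlt_le, Rinv_0_lt_compat. nra. Qed.

(* telescoping against 1/m - 1/(m+1) *)
Lemma rsum_inv_sq_tail a N : (1 <= a)%nat -> rsum (seq a N) inv_sq <= / INR a - / INR (a + N).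
Proof.
  revert a. induction N as [|N IH]; intros a Ha.
  - simpl. rewrite Nat.add_0_r. unfold rsum; simpl. lra.
  - simpl seq. unfold rsum; simpl. fold (rsum (seq (S a) N) inv_sq).
    specialize (IH (S a) ltac:(lia)). replace (a + S N)%nat with (S a + N)%nat by lia.
    assert (inv_sq a + / INR (S a) <= / INR a); [|lra].
    unfold inv_sq. rewrite S_INR. apply le_INR in Ha. simpl in Ha.
    replace (/ ((INR a + 1) * (INR a + 1)) + / (INR a + 1)) with ((INR a + 2) / ((INR a + 1) * (INR a + 1)))
      by (field; lra).
    apply (Rmult_le_reg_r ((INR a + 1) * (INR a + 1) * INR a)); [nra|].
    replace ((INR a + 2) / ((INR a + 1) * (INR a + 1)) * ((INR a + 1) * (INR a + 1) * INR a))
      with ((INR a + 2) * INR a) by (field; lra).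
    replace (/ INR a * ((INR a + 1) * (INR a + 1) * INR a)) with ((INR a + 1) * (INR a + 1)) by (field; lra).
    nra.
Qed.

Lemma rsum_inv_sq_tail_le a N : (1 <= a)%nat -> rsum (seq a N) inv_sq <= / INR a.
Proof.
  intros Ha. pose proof (rsum_inv_sq_tail a N Ha).
  assert (0 < / INR (a + N)) by (apply Rinv_0_lt_compat, lt_0_INR; lia). lra.
Qed.

Lemma rsum_inv_sq_le_2 N : rsum (seq 0 N) inv_sq <= 2.
Proof.
  destruct N as [|N]; [unfold rsum; simpl; lra|].
  simpl seq. unfold rsum; simpl. fold (rsum (seq 1 N) inv_sq).
  pose proof (rsum_inv_sq_tail_le 1 N (le_n _)). unfold inv_sq at 1. simpl in *. lra.
Qed.

Lemma Cmod_lsum_lsum_le (A B : list nat) (z : nat -> nat -> C) C0 :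
  0 <= C0 -> (forall m n, Cmod (z m n) <= C0 * inv_sq m * inv_sq n) ->
  Cmod (lsum A (fun m => lsum B (z m))) <= C0 * rsum A inv_sq * rsum B inv_sq.
Proof.
  intros HC Hz. eapply Rle_trans; [apply Cmod_lsum|].
  apply Rle_trans with (rsum A (fun m => C0 * rsum B inv_sq * inv_sq m)); [|rewrite rsum_mult_l; right; ring].
  apply rsum_le. intros m _. eapply Rle_trans; [apply Cmod_lsum|].
  apply Rle_trans with (rsum B (fun n => C0 * inv_sq m * inv_sq n)); [apply rsum_le; intros; apply Hz|].
  rewrite rsum_mult_l. right. ring.
Qed.

Lemma mform_tail x w C0 M N : (1 <= M)%nat -> (M <= N)%nat -> 0 <= C0 ->
  (forall m n, Cmod (Cconj (w m) * x m n * w n)%C <= C0 * inv_sq m * inv_sq n) ->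
  Cmod (mform x (seq 0 N) w - mform x (seq 0 M) w)%C <= 4 * C0 / INR M.
Proof.
  intros HM HMN HC Hz. set (z := fun m n => (Cconj (w m) * x m n * w n)%C) in Hz.
  assert (Hm : forall l, mform x l w = lsum l (fun m => lsum l (z m))) by reflexivity. rewrite !Hm.
  replace (seq 0 N) with (seq 0 M ++ seq M (N - M)) by (rewrite <- seq_app; f_equal; lia).
  set (A := seq 0 M). set (B := seq M (N - M)).
  rewrite lsum_app, (lsum_ext A _ (fun m => lsum A (z m) + lsum B (z m))%C) by (intros; apply lsum_app).
  rewrite lsum_add.
  replace (lsum A (fun m => lsum A (z m)) + lsum A (fun m => lsum B (z m)) + lsum B (fun m => lsum (A ++ B) (z m))
           - lsum A (fun m => lsum A (z m)))%C
    with (lsum A (fun m => lsum B (z m)) + lsum B (fun m => lsum (A ++ B) (z m)))%C by ring.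
  eapply Rle_trans; [apply Cmod_triangle|].
  pose proof (Cmod_lsum_lsum_le A B z C0 HC Hz). pose proof (Cmod_lsum_lsum_le B (A ++ B) z C0 HC Hz).
  assert (HA : rsum A inv_sq <= 2) by apply rsum_inv_sq_le_2.
  assert (HB : rsum B inv_sq <= / INR M) by (apply rsum_inv_sq_tail_le; exact HM).
  assert (HAB : rsum (A ++ B) inv_sq <= 2) by (unfold A, B; rewrite <- seq_app; apply rsum_inv_sq_le_2).
  assert (0 <= rsum A inv_sq) by (apply rsum_nonneg; intros; apply inv_sq_pos).
  assert (0 <= rsum B inv_sq) by (apply rsum_nonneg; intros; apply inv_sq_pos).
  assert (0 <= rsum (A ++ B) inv_sq) by (apply rsum_nonneg; intros; apply inv_sq_pos).
  assert (C0 * rsum A inv_sq * rsum B inv_sq <= C0 * 2 * / INR M) by (apply Rmult_le_compat; nra).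
  assert (C0 * rsum B inv_sq * rsum (A ++ B) inv_sq <= C0 * / INR M * 2) by (apply Rmult_le_compat; nra).
  unfold Rdiv. nra.
Qed.

Lemma lsum_delta (g : nat -> C) k M : (k < M)%nat ->
  lsum (seq 0 M) (fun m => if Nat.eq_dec k m then g m else RtoC 0) = g k.
Proof.
  induction M as [|M IH]; intros Hk; [lia|]. rewrite seq_S, lsum_app. unfold lsum at 2. simpl.
  destruct (Nat.eq_dec k M) as [->|Hne].
  - rewrite (lsum_ext _ _ (fun _ => RtoC 0)), lsum_0; [ring|].
    intros m Hm. apply in_seq in Hm. destruct (Nat.eq_dec M m); [lia | reflexivity].
  - rewrite IH by lia. ring.
Qed.

Definition lnn (m : nat) : R := ln (INR (S m)).

Lemma lnn_nonneg m : 0 <= lnn m.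
Proof.
  unfold lnn. rewrite <- ln_1. destruct m as [|m]; [simpl; lra|].
  left. apply ln_increasing; [lra|]. rewrite S_INR. pose proof (INR_S_pos m). lra.
Qed.

Lemma lnn_inj m n : lnn m = lnn n -> m = n.
Proof. unfold lnn. intros H. apply ln_inv in H; try apply INR_S_pos. apply INR_eq in H. lia. Qed.

Lemma npow_neg_cexp n (s : C) :
  npow_neg n s = (RtoC (exp (- Re s * ln (INR n))) * cexp (- (Im s * ln (INR n))))%C.
Proof.
  unfold npow_neg, cexp. rewrite cos_neg, sin_neg. apply injective_projections; simpl; ring.
Qed.

Lemma Cmod_npow_neg n s : Cmod (npow_neg n s) = exp (- Re s * ln (INR n)).
Proof.
  rewrite npow_neg_cexp, Cmod_mult, Cmod_R, Cmod_cexp, Rmult_1_r. apply Rabs_right, Rle_ge, Rlt_le, exp_pos.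
Qed.

Lemma Re_pair_gt rho sigma tau : rho < sigma -> rho < Re (sigma, tau).
Proof. auto. Qed.

Section DirichletKernel.
Variable rho : R.
Variable x : nat -> nat -> C.
Variable L : Hrho rho -> Hrho rho -> C.
Hypothesis HL : is_dirichlet_kernel rho x L.

Definition npw (n : nat) (s : Hrho rho) : C := npow_neg (S n) (proj1_sig s).

Definition dcoef (pts : list (Hrho rho * C)) (n : nat) : C :=
  Cconj (lsum pts (fun p => snd p * npw n (fst p)))%C.

Lemma kform_dirichlet_lim pts : is_lim_Cseq (fun N => mform x (seq 0 N) (dcoef pts)) (kform L pts).
Proof.
  unfold kform. eapply filterlim_ext;
    [|apply filterlim_lsum; intros p _; apply filterlim_lsum; intros r _; apply filterlim_Cscal;
      exact (dseries_to_diag _ _ (proj1 (HL (fst p) (fst r))))].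
  intros N. simpl. unfold dcoef. rewrite mform_lsum. apply lsum_ext. intros p _. apply lsum_ext. intros r _.
  rewrite dsum_lsum, <- lsum_mult_l. apply lsum_ext. intros m _. rewrite <- lsum_mult_l. apply lsum_ext.
  intros n _.
  unfold kterm, npw. rewrite npow_neg_conj, !Cmult_conj. ring.
Qed.

Lemma psd_kernel_of_formally_psd : formally_psd x -> psd_kernel L.
Proof.
  intros Hx. apply psd_kernelE. intros pts. apply (is_lim_Cseq_nonneg_real _ _ (kform_dirichlet_lim pts)).
  intros N. apply Hx, seq_NoDup.
Qed.

Section CoefficientRecovery.
Hypothesis L_psd : psd_kernel L.
Variable F : list nat.
Variable w : nat -> C.

(* Two abscissae in H_rho: the coefficients are bounded against sigma0, and the test
   points sit on the line Re s = sigma1 = sigma0 + 2, which buys the summable factor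
   1/(m+1)^2 of [exp_sigma1] in the tail estimate. *)
Let sigma0 := rho + 1.
Let sigma1 := rho + 3.

Let sigma0_gt : rho < sigma0.
Proof. unfold sigma0. lra. Qed.

Let sigma1_gt : rho < sigma1.
Proof. unfold sigma1. lra. Qed.

Let s0 : Hrho rho := exist _ (sigma0, 0) (Re_pair_gt rho sigma0 0 sigma0_gt).

Let tp (h : R) (p : nat) : Hrho rho := exist _ (sigma1, INR p * h) (Re_pair_gt rho sigma1 _ sigma1_gt).

Let x_bound : exists B, 0 < B /\ forall m n,
  Cmod (x m n) * exp (- sigma0 * lnn m) * exp (- sigma0 * lnn n) <= B.
Proof.
  destruct (regularly_cv_to_bounded _ _ (HL s0 s0)) as [B [HB HxB]]. exists B. split; [exact HB|].
  intros m n. specialize (HxB m n). unfold kterm in HxB.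
  rewrite npow_neg_conj, !Cmod_mult, Cmod_conj, !Cmod_npow_neg in HxB. exact HxB.
Qed.

Let npw_tp n h p : npw n (tp h p) = (RtoC (exp (- sigma1 * lnn n)) * cexp (- (INR p * h * lnn n)))%C.
Proof. unfold npw. rewrite npow_neg_cexp. reflexivity. Qed.

(* averaging over the points sigma1 + i p h, p <= P, isolates the coefficients of index in F *)
Let pts (h : R) (P : nat) : list (Hrho rho * C) :=
  map (fun p => (tp h p, RtoC (/ INR (S P)) *
                  lsum F (fun k => Cconj (w k) * RtoC (exp (sigma1 * lnn k)) * cexp (INR p * h * lnn k)))%C)
      (seq 0 (S P)).

Let dcoef_pts h P n : dcoef (pts h P) n =
  Cconj (lsum F (fun k => Cconj (w k) * RtoC (exp (sigma1 * lnn k) * exp (- sigma1 * lnn n))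
                          * cexp_mean P (h * (lnn k - lnn n))))%C.
Proof.
  unfold dcoef, pts. f_equal. rewrite lsum_map. cbn [fst snd].
  rewrite (lsum_ext _ _ (fun p => lsum F (fun k => RtoC (/ INR (S P)) * (Cconj (w k)
    * RtoC (exp (sigma1 * lnn k) * exp (- sigma1 * lnn n)) * cexp (INR p * (h * (lnn k - lnn n))))))%C).
  - rewrite lsum_comm. apply lsum_ext. intros k _. unfold cexp_mean.
    rewrite <- !lsum_mult_l. apply lsum_ext. intros p _. ring.
  - intros p _. rewrite npw_tp, <- lsum_mult_l, <- lsum_mult_r. apply lsum_ext. intros k _.
    replace (cexp (INR p * (h * (lnn k - lnn n))))
      with (cexp (INR p * h * lnn k) * cexp (- (INR p * h * lnn n)))%C
      by (rewrite cexp_add; f_equal; ring).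
    rewrite RtoC_mult. ring.
Qed.

Let wsum : R := rsum F (fun k => Cmod (w k) * exp (sigma1 * lnn k)).

Let wsum_nonneg : 0 <= wsum.
Proof. apply rsum_nonneg. intros. apply Rmult_le_pos; [apply Cmod_ge_0 | apply Rlt_le, exp_pos]. Qed.

Let Cmod_dcoef_pts h P n : Cmod (dcoef (pts h P) n) <= wsum * exp (- sigma1 * lnn n).
Proof.
  rewrite dcoef_pts, Cmod_conj. eapply Rle_trans; [apply Cmod_lsum|].
  unfold wsum. rewrite (Rmult_comm (rsum _ _)), <- rsum_mult_l. apply rsum_le. intros k _.
  rewrite !Cmod_mult, Cmod_conj, Cmod_R, Rabs_right by (apply Rle_ge, Rmult_le_pos; apply Rlt_le, exp_pos).
  pose proof (Cmod_cexp_mean P (h * (lnn k - lnn n))). pose proof (Cmod_ge_0 (w k)).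
  pose proof (exp_pos (sigma1 * lnn k)). pose proof (exp_pos (- sigma1 * lnn n)).
  pose proof (Cmod_ge_0 (cexp_mean P (h * (lnn k - lnn n)))).
  assert (0 <= Cmod (w k) * (exp (sigma1 * lnn k) * exp (- sigma1 * lnn n))) by (apply Rmult_le_pos; nra).
  nra.
Qed.

Let delta (n : nat) : C := Cconj (lsum F (fun k => if Nat.eq_dec k n then Cconj (w k) else RtoC 0)).

Let dcoef_pts_lim h n : (forall k, In k F -> k <> n -> cexp (h * (lnn k - lnn n)) <> RtoC 1) ->
  is_lim_Cseq (fun P => dcoef (pts h P) n) (delta n).
Proof.
  intros Hh. eapply filterlim_ext; [intros P; symmetry; apply dcoef_pts|].
  apply filterlim_Cconj, filterlim_lsum.
  intros k Hk. destruct (Nat.eq_dec k n) as [->|Hne].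
  - eapply filterlim_ext; [|apply filterlim_Cconst]. intros P. simpl.
    rewrite Rminus_diag, Rmult_0_r, cexp_mean_0, <- exp_plus.
    replace (sigma1 * lnn n + - sigma1 * lnn n) with 0 by ring. rewrite exp_0. ring.
  - replace (RtoC 0) with (Cconj (w k) * RtoC (exp (sigma1 * lnn k) * exp (- sigma1 * lnn n)) * 0)%C by ring.
    apply filterlim_Cscal, cexp_mean_lim, Hh; auto.
Qed.

Let mform_delta M : (forall k, In k F -> (k < M)%nat) -> mform x (seq 0 M) delta = mform x F w.
Proof.
  intros HF. unfold delta. rewrite mform_lsum. unfold mform. apply lsum_ext. intros k Hk. apply lsum_ext.
  intros k' Hk'.
  transitivity (lsum (seq 0 M) (fun m => if Nat.eq_dec k m then
    lsum (seq 0 M) (fun n => if Nat.eq_dec k' n then Cconj (w k) * x m n * w k' else 0) else 0))%C.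
  - apply lsum_ext. intros m _. destruct (Nat.eq_dec k m).
    + apply lsum_ext. intros n _. destruct (Nat.eq_dec k' n).
      * rewrite Cconj_conj. ring.
      * apply injective_projections; simpl; ring.
    + rewrite (lsum_ext _ _ (fun _ => RtoC 0)); [apply lsum_0 | intros; ring].
  - rewrite (lsum_delta (fun m => lsum (seq 0 M) (fun n =>
      if Nat.eq_dec k' n then Cconj (w k) * x m n * w k' else 0))%C) by auto.
    apply (lsum_delta (fun n => Cconj (w k) * x k n * w k')%C). auto.
Qed.

Let exp_sigma1 m : exp (- sigma1 * lnn m) = exp (- sigma0 * lnn m) * inv_sq m.
Proof.
  unfold inv_sq.
  replace (- sigma1 * lnn m) with (- sigma0 * lnn m + - (lnn m + lnn m)) by (unfold sigma0, sigma1; ring).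
  rewrite exp_plus, exp_Ropp, exp_plus. unfold lnn. rewrite exp_ln by apply INR_S_pos. rewrite S_INR.
  reflexivity.
Qed.

(* With this step every h (lnn k - lnn n), n < M, k in F, lies in (-1, 1), where e^(it) = 1 only at t = 0. *)
Let hM (M : nat) : R := / (1 + (rsum (seq 0 M) lnn + rsum F lnn)).

Let cexp_hM_ne_1 M n k : (n < M)%nat -> In k F -> k <> n -> cexp (hM M * (lnn k - lnn n)) <> RtoC 1.
Proof.
  intros Hn Hk Hne Heq. set (S := rsum (seq 0 M) lnn + rsum F lnn).
  assert (HS : 0 <= S) by (apply Rplus_le_le_0_compat; apply rsum_nonneg; intros; apply lnn_nonneg).
  assert (Hh : 0 < hM M) by (apply Rinv_0_lt_compat; unfold S in HS; lra).
  assert (H1 : lnn n <= rsum (seq 0 M) lnn) by (apply rsum_In_le; [intros; apply lnn_nonneg | apply in_seq; lia]).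
  assert (H2 : lnn k <= rsum F lnn) by (apply rsum_In_le; [intros; apply lnn_nonneg | exact Hk]).
  pose proof (lnn_nonneg n). pose proof (lnn_nonneg k).
  assert (Hd : lnn k - lnn n <> 0) by (intros E; apply Hne, lnn_inj; lra).
  set (t := hM M * (lnn k - lnn n)).
  assert (Ht : Rabs t < 1).
  { unfold t. rewrite Rabs_mult, Rabs_right by lra. apply Rle_lt_trans with (hM M * S).
    - apply Rmult_le_compat_l; [lra|]. apply Rabs_le. unfold S. lra.
    - unfold hM. fold S. apply (Rmult_lt_reg_l (1 + S)); [lra|].
      rewrite <- Rmult_assoc, Rinv_r, Rmult_1_l, Rmult_1_r by lra. lra. }
  assert (Ht0 : t <> 0) by (apply Rmult_integral_contrapositive; split; lra).
  assert (Hs : sin t = 0) by (apply (f_equal snd) in Heq; exact Heq).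
  pose proof PI2_1. apply Rabs_def2 in Ht. destruct (Rlt_dec 0 t).
  - pose proof (sin_gt_0 t r ltac:(lra)). lra.
  - pose proof (sin_gt_0 (- t) ltac:(lra) ltac:(lra)). rewrite sin_neg in *. lra.
Qed.

Let mform_pts_tail Bx h P M N :
  (forall m n, Cmod (x m n) * exp (- sigma0 * lnn m) * exp (- sigma0 * lnn n) <= Bx) ->
  (1 <= M)%nat -> (M <= N)%nat ->
  Cmod (mform x (seq 0 N) (dcoef (pts h P)) - mform x (seq 0 M) (dcoef (pts h P)))%C
  <= 4 * (wsum * wsum * Bx) / INR M.
Proof.
  intros HxB HM HMN. pose proof wsum_nonneg.
  assert (HBx : 0 <= Bx).
  { eapply Rle_trans; [|apply (HxB 0%nat 0%nat)].
    pose proof (Cmod_ge_0 (x 0%nat 0%nat)). pose proof (exp_pos (- sigma0 * lnn 0)). apply Rmult_le_pos; nra. }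
  apply mform_tail; [exact HM | exact HMN | nra|]. intros m n. rewrite !Cmod_mult, Cmod_conj.
  pose proof (Cmod_dcoef_pts h P m) as Hm. pose proof (Cmod_dcoef_pts h P n) as Hn.
  rewrite exp_sigma1 in Hm, Hn. specialize (HxB m n).
  pose proof (exp_pos (- sigma0 * lnn m)). pose proof (exp_pos (- sigma0 * lnn n)).
  pose proof (inv_sq_pos m). pose proof (inv_sq_pos n). pose proof (Cmod_ge_0 (x m n)).
  apply Rle_trans with
    (wsum * (exp (- sigma0 * lnn m) * inv_sq m) * Cmod (x m n)
     * (wsum * (exp (- sigma0 * lnn n) * inv_sq n))).
  - apply Rmult_le_compat; auto using Rmult_le_pos, Cmod_ge_0. apply Rmult_le_compat_r; auto using Cmod_ge_0.
  - replace (wsum * (exp (- sigma0 * lnn m) * inv_sq m) * Cmod (x m n)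
             * (wsum * (exp (- sigma0 * lnn n) * inv_sq n)))
      with (wsum * wsum * (Cmod (x m n) * exp (- sigma0 * lnn m) * exp (- sigma0 * lnn n)) * inv_sq m * inv_sq n)
      by ring.
    apply Rmult_le_compat_r; [auto|]. apply Rmult_le_compat_r; [auto|]. apply Rmult_le_compat_l; nra.
Qed.

Let mform_pts_lim M : (forall k, In k F -> (k < M)%nat) ->
  is_lim_Cseq (fun P => mform x (seq 0 M) (dcoef (pts (hM M) P))) (mform x F w).
Proof.
  intros HFM. rewrite <- (mform_delta M HFM). apply mform_lim. intros n Hn. apply in_seq in Hn.
  apply dcoef_pts_lim. intros k Hk Hne. apply cexp_hM_ne_1; auto; lia.
Qed.

Lemma mform_nonneg : nonneg_real (mform x F w).
Proof.
  apply nonneg_real_approx. intros e He. destruct x_bound as [Bx [HBx HxB]].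
  set (C0 := wsum * wsum * Bx). assert (HC0 : 0 <= C0) by (unfold C0; pose proof wsum_nonneg; nra).
  destruct (INR_unbounded (8 * C0 / e)) as [N1 HN1]. set (M := S (list_max F + N1)).
  assert (HFM : forall k, In k F -> (k < M)%nat).
  { intros k Hk. pose proof (proj1 (list_max_le F (list_max F)) (le_n _)) as HF.
    rewrite Forall_forall in HF. specialize (HF k Hk). unfold M. lia. }
  assert (HM : 4 * C0 / INR M < e / 2).
  { assert (INR N1 <= INR M) by (apply le_INR; unfold M; lia). assert (0 < INR M) by (apply lt_0_INR; unfold M; lia).
    apply (Rmult_lt_reg_r (INR M)); [lra|]. replace (4 * C0 / INR M * INR M) with (4 * C0) by (field; lra).
    assert (8 * C0 / e * e < INR M * e) by (apply Rmult_lt_compat_r; lra).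
    replace (8 * C0 / e * e) with (8 * C0) in * by (field; lra). nra. }
  destruct (proj1 (is_lim_Cseq_eps _ _) (mform_pts_lim M HFM) (e/4)) as [P HP]; [lra|].
  specialize (HP P (le_n _)). set (u := pts (hM M) P) in *.
  exists (kform L u). split; [apply (proj1 (psd_kernelE L) L_psd)|].
  destruct (proj1 (is_lim_Cseq_eps _ _) (kform_dirichlet_lim u) (e/4)) as [N2 HN2]; [lra|].
  set (N := max N2 M). specialize (HN2 N ltac:(unfold N; lia)).
  pose proof (mform_pts_tail Bx (hM M) P M N HxB ltac:(unfold M; lia) ltac:(unfold N; lia)) as Htail.
  fold u C0 in Htail.
  set (a := (mform x (seq 0 M) (dcoef u) - mform x F w)%C) in *.
  set (b := (mform x (seq 0 N) (dcoef u) - mform x (seq 0 M) (dcoef u))%C) in *.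
  set (c := (mform x (seq 0 N) (dcoef u) - kform L u)%C) in *.
  replace (mform x F w - kform L u)%C with (- a + - b + c)%C by (unfold a, b, c; ring).
  pose proof (Cmod_triangle (- a + - b) c). pose proof (Cmod_triangle (- a) (- b)).
  rewrite !Cmod_opp in *. lra.
Qed.

End CoefficientRecovery.

Lemma formally_psd_of_psd_kernel : psd_kernel L -> formally_psd x.
Proof. intros HLpsd. apply formally_psdE. intros F w _. apply mform_nonneg, HLpsd. Qed.

End DirichletKernel.

Theorem corollary2p8 (rho : R) (a : nat -> nat -> C)
  (K : Hrho rho -> Hrho rho -> C)
  (HK : is_dirichlet_kernel rho a K) (Hpsd : psd_kernel K)
  (fh : nat -> C) (f : Hrho rho -> C)
  (Hf : forall s : Hrho rho,
          series_to (fun n => Cmult (fh n) (npow_neg (S n) (proj1_sig s))) (f s)) :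
  in_RKHS rho K f <->
  exists c : R, 0 <= c /\
    formally_psd (fun m n =>
      Cminus (Cmult (RtoC (c ^ 2)) (a m n)) (Cmult (fh m) (Cconj (fh n)))).
Proof.
  rewrite (in_RKHS_iff_psd_kernel rho K f Hpsd).
  split; intros [c [Hc Hpos]]; exists c; split; auto;
    pose proof (is_dirichlet_kernel_rank_one_update rho a K fh f c HK Hf) as Hupd.
  - exact (formally_psd_of_psd_kernel rho _ _ Hupd Hpos).
  - exact (psd_kernel_of_formally_psd rho _ _ Hupd Hpos).
Qed.
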